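(* Let $p>0$ and, for $\lambda<1$, let $v(x;\lambda)$ be the unique $C^1(\mathbb{R})$ solution of $-v''+v-(2p+1)(p+1)\operatorname{sech}^2(px)v=\lambda v$ with $\lim_{x\to+\infty}v(x;\lambda)e^{\sqrt{1-\lambda}x}=1$. Assume that $v(\cdot;\lambda_1)$ has a simple zero at $x=x_1\in\mathbb{R}$ for some $\lambda_1\in(-\infty,1)$. Then there exists a unique $C^1$ function $\lambda\mapsto x_0(\lambda)$, defined for $\lambda$ near $\lambda_1$, such that $v(\cdot;\lambda)$ has a simple zero at $x=x_0(\lambda)$, $x_0(\lambda_1)=x_1$, and $x_0'(\lambda_1)>0$. *)

From Stdlib Require Import Reals.
From Coquelicot Require Import Coquelicot.
Open Scope R_scope.

Definition sech (x : R) : R := / cosh x.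

Definition solves_ode (p lam : R) (w : R -> R) : Prop :=
  forall x, ex_derive w x /\
    exists d2, is_derive (Derive w) x d2 /\
      - d2 + w x - (2*p+1)*(p+1) * (sech (p*x))^2 * w x = lam * w x.

Definition normalized_at_pinfty (lam : R) (w : R -> R) : Prop :=
  is_lim (fun x => w x * exp (sqrt (1 - lam) * x)) p_infty 1.

Definition simple_zero (w : R -> R) (x : R) : Prop :=
  ex_derive w x /\ w x = 0 /\ Derive w x <> 0.

Definition C1_on (f : R -> R) (a b : R) : Prop :=
  forall t, a < t < b -> ex_derive f t /\ continuous (Derive f) t.

(* With [k = sqrt (1 - lam)], the pair [g = v exp (k x)], [h = (v' + k v) exp (k x)] solves
   [g' = h], [h' = 2 k h - q g] with [q = (2p+1)(p+1) sech^2 (p x)] nonnegative and integrable,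
   and [g -> 1] at [+oo].  Integrating from [+oo] gives Volterra equations for [g] and [h];
   Gronwall's lemma bounds [g] by [exp (sup |Q| / k)] ([Q] a primitive of [q]) and makes [g]
   and [h] Lipschitz in [k], so [v] and [v_x] are jointly continuous in [(x, lam)].

   The Wronskian of two solutions satisfies
   [v(x;lam) v_x(x;mu) - v_x(x;lam) v(x;mu) = (mu - lam) J(x;lam,mu)], where [J] is the integral
   of [v(.;lam) v(.;mu)] over [[x, +oo)].  At the zero [x0(mu)] this writes the difference
   quotient of [x0] as [J / (v_x v_x)] at nearby points, so [x0] is [C^1] with
   [x0' = J(x0;lam,lam) / v_x(x0;lam)^2 > 0].

   [x0(lam)] is the only zero of [v(.;lam)] in a box [[x1 - r, x1 + r]] on which [v_x] keeps its
   sign; a continuous branch of zeros through [(lam1, x1)] cannot leave the box, since [v] does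
   not vanish on its vertical sides. *)

From Stdlib Require Import Reals Lra Ranalysis5 ClassicalEpsilon.
From Coquelicot Require Import Coquelicot.
Open Scope R_scope.

Lemma is_derive_Rmult (f g : R -> R) x df dg :
  is_derive f x df -> is_derive g x dg ->
  is_derive (fun y => f y * g y) x (df * g x + f x * dg).
Proof. intros Hf Hg. apply (is_derive_mult f g x df dg Hf Hg). intros; apply Rmult_comm. Qed.

Lemma is_derive_Rplus (f g : R -> R) x df dg :
  is_derive f x df -> is_derive g x dg -> is_derive (fun y => f y + g y) x (df + dg).
Proof. apply (is_derive_plus f g). Qed.

Lemma is_derive_Rminus (f g : R -> R) x df dg :
  is_derive f x df -> is_derive g x dg -> is_derive (fun y => f y - g y) x (df - dg).
Proof. apply (is_derive_minus f g). Qed.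

Lemma is_derive_eq (f : R -> R) (x d d' : R) : is_derive f x d -> d = d' -> is_derive f x d'.
Proof. now intros H <-. Qed.

Lemma is_derive_exp_affine a b x : is_derive (fun y => exp (a * y + b)) x (a * exp (a * x + b)).
Proof. auto_derive; auto; ring. Qed.

Lemma is_derive_exp_lin a x : is_derive (fun y => exp (a * y)) x (a * exp (a * x)).
Proof. auto_derive; auto; ring. Qed.

Lemma is_derive_continuous (f : R -> R) x d : is_derive f x d -> continuous f x.
Proof. intros H. apply (ex_derive_continuous (V := R_NormedModule)). now exists d. Qed.

Lemma is_derive_continuity_pt (f : R -> R) x d : is_derive f x d -> continuity_pt f x.
Proof. intros H. apply continuity_pt_filterlim, (is_derive_continuous f x d H). Qed.

Lemma continuous_Rmult (f g : R -> R) x :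
  continuous f x -> continuous g x -> continuous (fun y => f y * g y) x.
Proof. apply (continuous_mult f g). Qed.

Lemma continuous_Rplus (f g : R -> R) x :
  continuous f x -> continuous g x -> continuous (fun y => f y + g y) x.
Proof. apply (continuous_plus f g). Qed.

Lemma continuous_Rminus (f g : R -> R) x :
  continuous f x -> continuous g x -> continuous (fun y => f y - g y) x.
Proof. apply (continuous_minus f g). Qed.

Lemma continuous_Rabs_comp (f : R -> R) x : continuous f x -> continuous (fun y => Rabs (f y)) x.
Proof. intros H. apply (continuous_comp f Rabs); auto. apply continuous_Rabs. Qed.

Lemma continuous_exp_affine a b x : continuous (fun y => exp (a * y + b)) x.
Proof. exact (is_derive_continuous _ _ _ (is_derive_exp_affine a b x)). Qed.

Lemma le_of_is_derive_nonneg (f df : R -> R) a b :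
  a <= b -> (forall x, a <= x <= b -> is_derive f x (df x)) ->
  (forall x, a <= x <= b -> 0 <= df x) -> f a <= f b.
Proof.
  intros Hab Hd Hp. destruct (Req_dec a b) as [->|Hne]; [lra|].
  destruct (MVT_gen f a b df) as [c [Hc Heq]].
  - intros x Hx. apply Hd. rewrite Rmin_left, Rmax_right in Hx by lra. lra.
  - intros x Hx. rewrite Rmin_left, Rmax_right in Hx by lra.
    apply (is_derive_continuity_pt f x (df x)), Hd; lra.
  - rewrite Rmin_left, Rmax_right in Hc by lra.
    assert (0 <= df c * (b - a)) by (apply Rmult_le_pos; [apply Hp|]; lra). lra.
Qed.

Lemma eq_of_is_derive_0 (f : R -> R) a b : (forall x, is_derive f x 0) -> f a = f b.
Proof.
  intros H. destruct (Rtotal_order a b) as [Hab|[->|Hab]]; [|reflexivity|symmetry];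
    apply (eq_is_derive f); auto.
Qed.

Lemma le_of_eventually_le (y L M0 : R) (F : R -> R) :
  (forall X, M0 <= X -> y <= F X) ->
  (forall eps, 0 < eps -> exists M, forall X, M <= X -> F X <= L + eps) -> y <= L.
Proof.
  intros H1 H2. apply Rnot_lt_le. intros Hlt.
  destruct (H2 ((y - L) / 2)) as [M HM]; [lra|].
  specialize (H1 (Rmax M0 M) (Rmax_l _ _)). specialize (HM (Rmax M0 M) (Rmax_r _ _)). lra.
Qed.

Lemma eventually_and (P1 P2 : R -> Prop) :
  (exists M, forall x, M <= x -> P1 x) -> (exists M, forall x, M <= x -> P2 x) ->
  exists M, forall x, M <= x -> P1 x /\ P2 x.
Proof.
  intros [M1 H1] [M2 H2]. exists (Rmax M1 M2). intros x Hx.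
  pose proof (Rmax_l M1 M2); pose proof (Rmax_r M1 M2). split; [apply H1|apply H2]; lra.
Qed.

Lemma Rabs_bounds x : - Rabs x <= x <= Rabs x.
Proof. apply Rabs_le_between, Rle_refl. Qed.

Lemma Rabs_mult_sub_sqr_le a b c e B : Rabs (a - c) <= e -> Rabs (b - c) <= e -> Rabs c <= B ->
  Rabs (a * b - c * c) <= (2 * B + e) * e.
Proof.
  intros Ha Hb Hc. replace (a * b - c * c) with (a * (b - c) + c * (a - c)) by ring.
  assert (Ha' : Rabs a <= B + e).
  { replace a with (c + (a - c)) by ring. eapply Rle_trans; [apply Rabs_triang|lra]. }
  eapply Rle_trans; [apply Rabs_triang|]. rewrite !Rabs_mult.
  pose proof (Rabs_pos (b - c)). pose proof (Rabs_pos (a - c)). pose proof (Rabs_pos a). pose proof (Rabs_pos c).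
  assert (Rabs a * Rabs (b - c) <= (B + e) * e) by (apply Rmult_le_compat; lra).
  assert (Rabs c * Rabs (a - c) <= B * e) by (apply Rmult_le_compat; lra).
  lra.
Qed.

Lemma exp_le_exp_of_le a b : a <= b -> exp a <= exp b.
Proof. intros [H | ->]; [left; apply exp_increasing|]; lra. Qed.

Lemma Rabs_exp_sub_le a b : Rabs (exp a - exp b) <= exp (Rmax a b) * Rabs (a - b).
Proof.
  assert (Hle : forall a b, a <= b -> Rabs (exp a - exp b) <= exp b * Rabs (a - b)).
  { clear a b. intros a b Hab.
    assert (E : exp a = exp b * exp (a - b)) by (rewrite <- exp_plus; f_equal; ring).
    pose proof (exp_le_exp_of_le a b Hab).
    rewrite !Rabs_left1 by lra.
    pose proof (exp_ineq1_le (a - b)). pose proof (exp_pos b). nra. }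
  destruct (Rle_dec a b) as [H|H].
  - rewrite Rmax_right by lra. now apply Hle.
  - rewrite Rmax_left by lra. rewrite Rabs_minus_sym, (Rabs_minus_sym a). apply Hle; lra.
Qed.

Lemma exp_neg_mul_le_inv A X : 0 < A -> 0 < X -> exp (- A * X) <= / (A * X).
Proof.
  intros HA HX. pose proof (exp_ineq1_le (A * X)).
  assert (E : exp (- A * X) * exp (A * X) = 1) by (rewrite <- exp_plus, <- exp_0; f_equal; ring).
  pose proof (exp_pos (- A * X)).
  apply (Rmult_le_reg_r (A * X)); [nra|]. rewrite Rinv_l by nra. nra.
Qed.

Lemma eventually_exp_neg_le A eps :
  0 < A -> 0 < eps -> exists M, 0 <= M /\ forall X, M <= X -> exp (- A * X) <= eps.
Proof.
  intros HA He. assert (HAe : 0 < A * eps) by nra.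
  exists (/ (A * eps)). split; [left; now apply Rinv_0_lt_compat|].
  intros X HX. assert (H1 : 1 <= A * eps * X).
  { rewrite <- (Rinv_r (A * eps)) by lra. now apply Rmult_le_compat_l; [lra|]. }
  assert (HX0 : 0 < X) by nra.
  eapply Rle_trans; [apply exp_neg_mul_le_inv; auto|].
  apply (Rmult_le_reg_l (A * X)); [nra|]. rewrite Rinv_r by nra. nra.
Qed.

Section Integrals.

Variables f g : R -> R.
Hypothesis Hf : forall x, continuous f x.
Hypothesis Hg : forall x, continuous g x.

Lemma ex_RInt_of_continuous a b : ex_RInt f a b.
Proof. apply (ex_RInt_continuous (V := R_CompleteNormedModule)). intros; apply Hf. Qed.

Lemma is_derive_RInt_upper a x : is_derive (fun y => RInt f a y) x (f x).
Proof.
  apply (is_derive_RInt f (fun y => RInt f a y) a x); [|apply Hf].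
  apply filter_forall. intros y. apply (RInt_correct (V := R_CompleteNormedModule)).
  apply ex_RInt_of_continuous.
Qed.

Lemma RInt_Chasles_sub a b c : RInt f a c - RInt f a b = RInt f b c.
Proof.
  rewrite <- (RInt_Chasles f a b c) by apply ex_RInt_of_continuous. unfold plus; simpl. ring.
Qed.

Lemma RInt_swap a b : RInt f b a = - RInt f a b.
Proof. rewrite <- (opp_RInt_swap f a b) by apply ex_RInt_of_continuous. reflexivity. Qed.

Lemma abs_RInt_le_const_sym a b M :
  (forall t, Rmin a b <= t <= Rmax a b -> Rabs (f t) <= M) -> Rabs (RInt f a b) <= Rabs (b - a) * M.
Proof.
  intros H. destruct (Rle_dec a b) as [Hab|Hab].
  - rewrite (Rabs_right (b - a)) by lra. apply abs_RInt_le_const; [lra|apply ex_RInt_of_continuous|].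
    intros t Ht. apply H. rewrite Rmin_left, Rmax_right by lra. lra.
  - rewrite RInt_swap, Rabs_Ropp, (Rabs_left (b - a)), Ropp_minus_distr by lra.
    apply abs_RInt_le_const; [lra|apply ex_RInt_of_continuous|].
    intros t Ht. apply H. rewrite Rmin_right, Rmax_left by lra. lra.
Qed.

Lemma abs_RInt_le_RInt a b :
  a <= b -> (forall x, a <= x <= b -> Rabs (f x) <= g x) -> Rabs (RInt f a b) <= RInt g a b.
Proof.
  intros Hab H. eapply Rle_trans; [apply abs_RInt_le; [|apply ex_RInt_of_continuous]; auto|].
  apply RInt_le; auto.
  - apply (ex_RInt_continuous (V := R_CompleteNormedModule)). intros; now apply continuous_Rabs_comp.
  - apply (ex_RInt_continuous (V := R_CompleteNormedModule)). intros; apply Hg.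
  - intros; apply H; lra.
Qed.

Lemma RInt_Rminus a b : RInt (fun t => f t - g t) a b = RInt f a b - RInt g a b.
Proof.
  apply (RInt_minus f g); apply (ex_RInt_continuous (V := R_CompleteNormedModule)); auto.
Qed.

Lemma RInt_Rplus a b : RInt (fun t => f t + g t) a b = RInt f a b + RInt g a b.
Proof.
  apply (RInt_plus f g); apply (ex_RInt_continuous (V := R_CompleteNormedModule)); auto.
Qed.

Lemma RInt_Rmult_l c a b : RInt (fun t => c * f t) a b = c * RInt f a b.
Proof. apply (RInt_scal f a b c), ex_RInt_of_continuous. Qed.

End Integrals.

Lemma is_lim_of_eventually_le (f : R -> R) (l : R) :
  (forall eps, 0 < eps -> exists M, forall x, M <= x -> Rabs (f x - l) <= eps) -> is_lim f p_infty l.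
Proof.
  intros H. apply is_lim_spec. intros eps. destruct (H (eps / 2)) as [M HM]; [apply is_pos_div_2|].
  exists M. intros x Hx. pose proof (cond_pos eps). specialize (HM x ltac:(lra)). lra.
Qed.

Lemma is_lim_exp_neg k : 0 < k -> is_lim (fun X => exp (- k * X)) p_infty 0.
Proof.
  intros Hk. apply is_lim_of_eventually_le. intros eps He.
  destruct (eventually_exp_neg_le k eps Hk He) as [M [_ HM]]. exists M. intros x Hx.
  rewrite Rminus_0_r, Rabs_right by (left; apply exp_pos). auto.
Qed.

Lemma continuity_2d_pt_of_lipschitz (F : R -> R -> R) (kf : R -> R) (L x0 l0 r : R) :
  0 < r -> continuity_pt kf l0 -> (forall x, continuity_pt (fun x => F x l0) x) ->
  (forall l x, Rabs (l - l0) < r -> Rabs (F x l - F x l0) <= Rabs (kf l - kf l0) * L) ->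
  continuity_2d_pt F x0 l0.
Proof.
  intros Hr Hk Hc Hlip eps.
  set (e := eps / (2 * (Rabs L + 1))).
  assert (He : 0 < e) by (apply Rdiv_lt_0_compat; [apply cond_pos|pose proof (Rabs_pos L); lra]).
  destruct (proj1 (continuity_pt_locally _ x0) (Hc x0) (pos_div_2 eps)) as [d1 H1].
  destruct (proj1 (continuity_pt_locally _ l0) Hk (mkposreal e He)) as [d2 H2].
  exists (mkposreal _ (Rmin_pos _ _ (Rmin_pos _ _ (cond_pos d1) (cond_pos d2)) Hr)). simpl.
  intros x l Hx Hl. pose proof (Rmin_l (Rmin d1 d2) r). pose proof (Rmin_r (Rmin d1 d2) r).
  pose proof (Rmin_l d1 d2). pose proof (Rmin_r d1 d2).
  specialize (H1 x ltac:(change (Rabs (x - x0) < d1); lra)). specialize (H2 l ltac:(change (Rabs (l - l0) < d2); lra)).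
  specialize (Hlip l x ltac:(lra)). simpl in H1, H2.
  replace (F x l - F x0 l0) with ((F x l - F x l0) + (F x l0 - F x0 l0)) by ring.
  eapply Rle_lt_trans; [apply Rabs_triang|].
  assert (Rabs (kf l - kf l0) * L <= eps / 2); [|lra].
  apply Rle_trans with (e * (Rabs L + 1)); [|right; unfold e; field; pose proof (Rabs_pos L); lra].
  pose proof (Rle_abs L). pose proof (Rabs_pos L). pose proof (Rabs_pos (kf l - kf l0)).
  apply Rle_trans with (Rabs (kf l - kf l0) * (Rabs L + 1)); [apply Rmult_le_compat_l|apply Rmult_le_compat_r]; lra.
Qed.

Lemma continuity_2d_pt_param (f : R -> R) x0 l0 :
  continuity_pt f l0 -> continuity_2d_pt (fun _ l => f l) x0 l0.
Proof. intros Hf. apply (continuity_1d_2d_pt_comp f (fun _ l => l)); [exact Hf|apply continuity_2d_pt_id2]. Qed.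

Lemma Rmult_pos_of_close a b : Rabs (a - b) < Rabs b -> 0 < a * b.
Proof.
  intros H. destruct (Rtotal_order b 0) as [Hb|[Hb|Hb]].
  - rewrite (Rabs_left b) in H by lra. apply Rabs_lt_between in H. nra.
  - subst. rewrite Rabs_R0 in H. pose proof (Rabs_pos (a - 0)). lra.
  - rewrite (Rabs_right b) in H by lra. apply Rabs_lt_between in H. nra.
Qed.

Lemma div_mult_continuity A0 B0 C0 eps : B0 <> 0 -> C0 <> 0 -> 0 < eps ->
  exists rho, 0 < rho /\ forall A B C, Rabs (A - A0) < rho -> Rabs (B - B0) < rho -> Rabs (C - C0) < rho ->
    Rabs (A / (B * C) - A0 / (B0 * C0)) < eps.
Proof.
  intros HB HC He.
  assert (Hdiv : continuity_2d_pt (fun a d => a / d) A0 (B0 * C0)).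
  { apply continuity_2d_pt_mult; [apply continuity_2d_pt_id1|].
    apply continuity_2d_pt_inv; [apply continuity_2d_pt_id2|]. now apply Rmult_integral_contrapositive. }
  destruct (Hdiv (mkposreal eps He)) as [r1 H1].
  destruct (continuity_2d_pt_mult _ _ B0 C0 (continuity_2d_pt_id1 B0 C0) (continuity_2d_pt_id2 B0 C0) r1)
    as [r2 H2].
  exists (Rmin r1 r2). split; [apply Rmin_pos; apply cond_pos|]. intros A B C HA HB' HC'.
  pose proof (Rmin_l r1 r2). pose proof (Rmin_r r1 r2).
  apply (H1 A (B * C)); [lra|]. apply (H2 B C); lra.
Qed.

Lemma exists_Rabs_sub_eq (f : R -> R) a b c r :
  (forall t, Rmin a b <= t <= Rmax a b -> continuity_pt f t) ->
  Rabs (f a - c) < r -> r <= Rabs (f b - c) ->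
  exists t, Rmin a b <= t <= Rmax a b /\ Rabs (f t - c) = r.
Proof.
  intros Hc Ha Hb. set (g := fun t => Rabs (f t - c) - r).
  assert (Hgc : forall t, Rmin a b <= t <= Rmax a b -> continuity_pt g t).
  { intros t Ht. apply continuity_pt_minus; [|apply continuity_pt_const; intros ? ?; reflexivity].
    apply (continuity_pt_comp (fun t => f t - c) Rabs); [|apply Rcontinuity_abs].
    apply continuity_pt_minus; [now apply Hc|apply continuity_pt_const; intros ? ?; reflexivity]. }
  assert (Hga : g a < 0) by (unfold g; lra).
  assert (Hgb : 0 <= g b) by (unfold g; lra).
  destruct (Req_dec (g b) 0) as [E|E].
  - exists b. split; [split; [apply Rmin_r|apply Rmax_r]|unfold g in E; lra].
  - assert (Hab : a <> b) by (intros ->; lra).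
    destruct (Rlt_le_dec a b) as [Hlt|Hle].
    + rewrite Rmin_left, Rmax_right in * by lra.
      destruct (IVT_interv g a b) as [t [Ht Hgt]]; auto; [lra|].
      exists t. split; [lra|unfold g in Hgt; lra].
    + rewrite Rmin_right, Rmax_left in * by lra.
      destruct (IVT_interv (fun t => - g t) b a) as [t [Ht Hgt]]; [|lra|lra|lra|].
      * intros; now apply continuity_pt_opp, Hgc.
      * exists t. split; [lra|unfold g in Hgt; lra].
Qed.

(** * Gronwall's lemma and the Volterra kernel *)

Lemma gronwall_backward (u B Phi : R -> R) (A s X : R) :
  s <= X -> (forall x, continuous u x) -> (forall x, continuous B x) ->
  (forall x, 0 <= B x) -> (forall x, is_derive Phi x (- B x)) ->
  (forall y, s <= y <= X -> u y <= A + RInt (fun t => B t * u t) y X) ->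
  u s <= A * exp (Phi s - Phi X).
Proof.
  intros HsX Hu HB HB0 HPhi Hyp.
  set (f := fun t => B t * u t).
  assert (Hfc : forall t, continuous f t) by (intros; apply continuous_Rmult; auto).
  (* [F y = (A + RInt f y X) exp (Phi X - Phi y)] is nondecreasing by the hypothesis. *)
  set (F := fun y => (A - RInt f X y) * exp (Phi X - Phi y)).
  assert (HF : F s <= F X).
  { apply (le_of_is_derive_nonneg F (fun y => B y * exp (Phi X - Phi y) * (A - RInt f X y - u y))); auto.
    - intros y Hy. unfold F. eapply is_derive_eq.
      + apply is_derive_Rmult.
        * apply is_derive_Rminus; [apply is_derive_const|apply is_derive_RInt_upper; auto].
        * apply (is_derive_comp exp (fun y => Phi X - Phi y)); [apply is_derive_exp|].
          apply is_derive_Rminus; [apply is_derive_const|apply HPhi].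
      + unfold f, scal, zero; simpl; unfold mult; simpl. ring.
    - intros y Hy. specialize (Hyp y Hy). rewrite (RInt_swap f Hfc) in Hyp.
      apply Rmult_le_pos; [apply Rmult_le_pos; [auto|left; apply exp_pos]|lra]. }
  unfold F in HF. rewrite RInt_point, Rminus_diag, exp_0 in HF. unfold zero in HF; simpl in HF.
  specialize (Hyp s (conj (Rle_refl s) HsX)). rewrite (RInt_swap f Hfc) in Hyp. fold f in Hyp.
  assert (E : exp (Phi X - Phi s) * exp (Phi s - Phi X) = 1).
  { rewrite <- exp_plus, <- exp_0. f_equal. ring. }
  pose proof (exp_pos (Phi s - Phi X)). pose proof (exp_pos (Phi X - Phi s)).
  assert (A - RInt f X s <= A * exp (Phi s - Phi X)).
  { rewrite <- (Rmult_1_r (A - RInt f X s)), <- E, <- Rmult_assoc.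
    apply Rmult_le_compat_r; lra. }
  lra.
Qed.

(* [jost_kernel k s t] is [RInt (fun u => exp (-2 k (u - s))) s t]. *)
Definition jost_kernel (k s t : R) := (1 - exp (-2 * k * t + 2 * k * s)) / (2 * k).

Lemma is_derive_jost_kernel k s y :
  0 < k -> is_derive (jost_kernel k s) y (exp (-2 * k * y + 2 * k * s)).
Proof. intros Hk. unfold jost_kernel. auto_derive; auto. field. lra. Qed.

Lemma continuous_jost_kernel k s y : 0 < k -> continuous (jost_kernel k s) y.
Proof. intros Hk. exact (is_derive_continuous _ _ _ (is_derive_jost_kernel k s y Hk)). Qed.

Ltac solve_continuous :=
  intros;
  repeat match goal with
  | |- continuous (fun _ => ?c) _ => apply continuous_const
  | |- continuous (fun x => @?f x * @?g x) _ => apply (continuous_Rmult f g)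
  | |- continuous (fun x => @?f x + @?g x) _ => apply (continuous_Rplus f g)
  | |- continuous (fun x => @?f x - @?g x) _ => apply (continuous_Rminus f g)
  | |- continuous (fun x => Rabs (@?f x)) _ => apply (continuous_Rabs_comp f)
  | |- continuous (fun x => @?f x / ?c) _ => apply (continuous_Rmult f (fun _ => / c))
  | |- continuous (fun x => exp (?a * x + ?b)) _ => apply continuous_exp_affine
  | |- continuous (fun x => jost_kernel ?k ?s x) _ => apply continuous_jost_kernel
  end; auto.

Lemma exp_damping_bounds k s t : 0 < k -> s <= t -> 0 < exp (-2 * k * t + 2 * k * s) <= 1.
Proof. intros Hk H. split; [apply exp_pos|]. rewrite <- exp_0. apply exp_le_exp_of_le. nra. Qed.

Lemma jost_kernel_bounds k s t : 0 < k -> s <= t -> 0 <= jost_kernel k s t <= / (2 * k).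
Proof.
  intros Hk Hst. destruct (exp_damping_bounds k s t Hk Hst). unfold jost_kernel, Rdiv.
  assert (0 < / (2 * k)) by (apply Rinv_0_lt_compat; lra). split; nra.
Qed.

Lemma Rabs_mult_jost_kernel_le k y X a : 0 < k -> y <= X ->
  Rabs (a * jost_kernel k y X) <= Rabs a / (2 * k).
Proof.
  intros Hk HyX. destruct (jost_kernel_bounds k y X Hk HyX).
  rewrite Rabs_mult, (Rabs_right (jost_kernel _ _ _)) by lra.
  unfold Rdiv. apply Rmult_le_compat_l; [apply Rabs_pos|lra].
Qed.

Lemma jost_kernel_diag k s : jost_kernel k s s = 0.
Proof.
  unfold jost_kernel. replace (-2 * k * s + 2 * k * s) with 0 by ring.
  rewrite exp_0. unfold Rdiv. ring.
Qed.

Lemma jost_kernel_lipschitz m k1 k2 s t : 0 < m -> m <= k1 -> m <= k2 -> s <= t ->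
  Rabs (jost_kernel k1 s t - jost_kernel k2 s t) <= Rabs (k1 - k2) / (2 * (m * m)).
Proof.
  intros Hm H1 H2 Hst.
  set (df := fun k => ((2 * k * (t - s) + 1) * exp (-2 * k * t + 2 * k * s) - 1) / (2 * k * k)).
  assert (Hd : forall k, 0 < k -> is_derive (fun k => jost_kernel k s t) k (df k)).
  { intros k Hk. unfold jost_kernel, df. auto_derive; [lra|]. field. lra. }
  destruct (MVT_gen (fun k => jost_kernel k s t) k2 k1 df) as [c [Hc Heq]].
  - intros x Hx. apply Hd. pose proof (Rmin_glb _ _ _ H2 H1). lra.
  - intros x Hx. pose proof (Rmin_glb _ _ _ H2 H1). apply (is_derive_continuity_pt _ _ _ (Hd x ltac:(lra))).
  - assert (Hcm : m <= c) by (pose proof (Rmin_glb _ _ _ H2 H1); lra).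
    rewrite Heq, Rabs_mult, Rabs_minus_sym, Rmult_comm. unfold Rdiv.
    apply Rmult_le_compat_l; [apply Rabs_pos|].
    (* with [y = 2 c (t - s) >= 0]: [0 <= (1 + y) exp (-y) <= 1] *)
    unfold df. set (y := 2 * c * (t - s)).
    replace (-2 * c * t + 2 * c * s) with (- y) by (unfold y; ring).
    assert (Hy : 0 <= y) by (unfold y; nra).
    pose proof (exp_ineq1_le y). pose proof (exp_pos (- y)). pose proof (exp_pos y).
    assert (E : exp y * exp (- y) = 1) by (rewrite <- exp_plus, <- exp_0; f_equal; ring).
    assert (N : 0 <= (y + 1) * exp (- y) <= 1) by (split; nra).
    unfold Rdiv. rewrite Rabs_mult, Rabs_left1 by lra.
    rewrite Rabs_right by (apply Rle_ge; left; apply Rinv_0_lt_compat; nra).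
    apply Rle_trans with (1 * / (2 * c * c)).
    + apply Rmult_le_compat_r; [left; apply Rinv_0_lt_compat; nra|lra].
    + rewrite Rmult_1_l. apply Rinv_le_contravar; nra.
Qed.

Lemma exp_damping_lipschitz m k1 k2 x t : 0 < m -> m <= k1 -> m <= k2 -> x <= t ->
  Rabs (exp (-2 * k1 * t + 2 * k1 * x) - exp (-2 * k2 * t + 2 * k2 * x)) <= Rabs (k1 - k2) / m.
Proof.
  intros Hm H1 H2 Hxt. eapply Rle_trans; [apply Rabs_exp_sub_le|].
  set (y := 2 * m * (t - x)). assert (Hy : 0 <= y) by (unfold y; nra).
  assert (Hmax : exp (Rmax (-2 * k1 * t + 2 * k1 * x) (-2 * k2 * t + 2 * k2 * x)) <= exp (- y)).
  { apply exp_le_exp_of_le. unfold y. apply Rmax_lub; nra. }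
  replace (-2 * k1 * t + 2 * k1 * x - (-2 * k2 * t + 2 * k2 * x)) with (y / m * (k2 - k1))
    by (unfold y; field; lra).
  rewrite Rabs_mult, (Rabs_right (y / m)), Rabs_minus_sym
    by (apply Rle_ge, Rmult_le_pos; [lra|left; apply Rinv_0_lt_compat; lra]).
  pose proof (exp_ineq1_le y). pose proof (exp_pos (- y)). pose proof (exp_pos y).
  assert (E : exp y * exp (- y) = 1) by (rewrite <- exp_plus, <- exp_0; f_equal; ring).
  assert (Hye : y * exp (- y) <= 1) by nra.
  pose proof (Rabs_pos (k1 - k2)).
  assert (Hm' : 0 < / m) by (apply Rinv_0_lt_compat; lra).
  unfold Rdiv. apply Rle_trans with (exp (- y) * (y * / m) * Rabs (k1 - k2)).
  - rewrite <- Rmult_assoc. apply Rmult_le_compat_r; [lra|].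
    apply Rmult_le_compat_r; [apply Rmult_le_pos; lra|lra].
  - replace (exp (- y) * (y * / m) * Rabs (k1 - k2)) with ((y * exp (- y)) * (Rabs (k1 - k2) * / m)) by ring.
    rewrite <- (Rmult_1_l (Rabs (k1 - k2) * / m)) at 2.
    apply Rmult_le_compat_r; [apply Rmult_le_pos|]; lra.
Qed.

(** * Jost pairs of an integrable potential *)

(* Integrability of [q] is encoded by a bounded primitive [Q]. *)
Record admissible_potential (q Q : R -> R) (Qb : R) : Prop := {
  pot_continuous : forall x, continuous q x;
  pot_nonneg : forall x, 0 <= q x;
  pot_primitive : forall x, is_derive Q x (q x);
  pot_primitive_bound : forall x, Rabs (Q x) <= Qb;
  pot_vanishes : forall eps, 0 < eps -> exists M, forall x, M <= x -> q x <= eps }.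

(* For a solution of [v'' = (k^2 - q) v] with [v x ~ exp (- k x)] at [+oo], the pair
   [g = v exp (k x)], [h = (v' + k v) exp (k x)] is a Jost pair. *)
Record jost_pair (q : R -> R) (k : R) (g h : R -> R) : Prop := {
  jost_k_pos : 0 < k;
  jost_dg : forall x, is_derive g x (h x);
  jost_dh : forall x, is_derive h x (2 * k * h x - q x * g x);
  jost_g_lim : forall eps, 0 < eps -> exists M, forall x, M <= x -> Rabs (g x - 1) <= eps }.

Section Jost.

Variables (q Q : R -> R) (Qb : R).
Hypothesis Hq : admissible_potential q Q Qb.
Let q_continuous : forall x, continuous q x := pot_continuous _ _ _ Hq.

Lemma jost_continuous_g k g h : jost_pair q k g h -> forall x, continuous g x.
Proof. intros Hj x. exact (is_derive_continuous _ _ _ (jost_dg _ _ _ _ Hj x)). Qed.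

Lemma Qb_nonneg : 0 <= Qb.
Proof. pose proof (pot_primitive_bound _ _ _ Hq 0). pose proof (Rabs_pos (Q 0)). lra. Qed.

Lemma RInt_pot_le a b : RInt q a b <= 2 * Qb.
Proof.
  rewrite (is_RInt_unique q a b (Q b - Q a)).
  - pose proof (pot_primitive_bound _ _ _ Hq a) as Ha. pose proof (pot_primitive_bound _ _ _ Hq b) as Hb.
    apply Rabs_le_between in Ha. apply Rabs_le_between in Hb. lra.
  - apply (is_RInt_derive Q q a b); intros; [apply (pot_primitive _ _ _ Hq)|apply q_continuous].
Qed.

(* If [h x > eps], then [h] stays above [eps + (h x - eps)] and [g] grows linearly. *)
Lemma jost_h_le_of_bounded (g h : R -> R) (k X0 eps : R) :
  0 < k -> 0 < eps ->
  (forall x, is_derive g x (h x)) -> (forall x, is_derive h x (2 * k * h x - q x * g x)) ->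
  (forall x, X0 <= x -> Rabs (g x) <= 2 /\ q x <= eps * k) ->
  forall x, X0 <= x -> h x <= eps.
Proof.
  intros Hk He Hg Hh Hb x Hx. apply Rnot_lt_le; intro Hlt. set (d := h x - eps).
  assert (Hhy : forall y, x <= y -> h y >= eps + d).
  { intros y Hy.
    assert (Hphi : (h x - eps) * exp (-2 * k * x + 2 * k * x) <= (h y - eps) * exp (-2 * k * y + 2 * k * x)).
    { apply (le_of_is_derive_nonneg (fun y => (h y - eps) * exp (-2 * k * y + 2 * k * x))
        (fun y => (2 * k * eps - q y * g y) * exp (-2 * k * y + 2 * k * x))); auto.
      - intros z Hz. eapply is_derive_eq.
        + apply is_derive_Rmult; [apply is_derive_Rminus; [apply Hh|apply is_derive_const]|].
          apply is_derive_exp_affine.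
        + unfold zero; simpl. ring.
      - intros z Hz. apply Rmult_le_pos; [|left; apply exp_pos].
        destruct (Hb z ltac:(lra)) as [H1 H2]. pose proof (pot_nonneg _ _ _ Hq z).
        pose proof (Rle_abs (g z)). nra. }
    replace (-2 * k * x + 2 * k * x) with 0 in Hphi by ring. rewrite exp_0 in Hphi.
    destruct (exp_damping_bounds k x y Hk Hy). unfold d. nra. }
  assert (Hd : 0 < d) by (unfold d; lra).
  set (y := x + 5 / d).
  assert (Hy : x <= y) by (unfold y; assert (0 < 5 / d) by (apply Rdiv_lt_0_compat; lra); lra).
  assert (Hpsi : g x - d * x <= g y - d * y).
  { apply (le_of_is_derive_nonneg (fun y => g y - d * y) (fun y => h y - d)); auto.
    - intros z Hz. eapply is_derive_eq.
      + apply is_derive_Rminus; [apply Hg|].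
        apply (is_derive_scal (fun t => t) z d 1), (is_derive_id (K := R_AbsRing)).
      + unfold scal; simpl; unfold mult; simpl. ring.
    - intros z Hz. pose proof (Hhy z ltac:(lra)). lra. }
  assert (d * y = d * x + 5) by (unfold y; field; lra).
  destruct (Hb x Hx) as [Hx1 _]. destruct (Hb y ltac:(lra)) as [Hy1 _].
  apply Rabs_le_between in Hx1. apply Rabs_le_between in Hy1. lra.
Qed.

Lemma jost_h_vanishes k g h : jost_pair q k g h ->
  forall eps, 0 < eps -> exists M, forall x, M <= x -> Rabs (h x) <= eps.
Proof.
  intros [Hk Hg Hh Hgl] eps He.
  destruct (eventually_and _ _ (Hgl 1 Rlt_0_1) (pot_vanishes _ _ _ Hq (eps * k) ltac:(nra)))
    as [M HM].
  assert (Hb : forall x, M <= x -> Rabs (g x) <= 2 /\ q x <= eps * k).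
  { intros z Hz. destruct (HM z Hz) as [H1 H2]. split; auto.
    apply Rabs_le_between in H1. apply Rabs_le_between. lra. }
  exists M. intros x Hx. apply Rabs_le_between. split.
  - assert (- h x <= eps); [|lra].
    apply (jost_h_le_of_bounded (fun x => - g x) (fun x => - h x) k M eps); auto.
    + intros z. apply (is_derive_opp g z (h z)), Hg.
    + intros z. eapply is_derive_eq; [apply (is_derive_opp h z), Hh|]. unfold opp; simpl. ring.
    + intros z Hz. rewrite Rabs_Ropp. apply Hb; auto.
  - apply (jost_h_le_of_bounded g h k M eps); auto.
Qed.

Lemma jost_volterra_g k g h : jost_pair q k g h -> forall s X,
  g s = g X - h X * jost_kernel k s X - RInt (fun t => jost_kernel k s t * q t * g t) s X.
Proof.
  intros Hj s X. destruct Hj as [Hk Hg Hh _].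
  assert (Hgc : forall x, continuous g x) by (intros x; exact (is_derive_continuous _ _ _ (Hg x))).
  assert (Hc : forall t, continuous (fun t => jost_kernel k s t * q t * g t) t) by solve_continuous.
  set (F := fun y => g y - h y * jost_kernel k s y - RInt (fun t => jost_kernel k s t * q t * g t) s y).
  assert (HF : F s = F X).
  { apply eq_of_is_derive_0. intros x. unfold F. eapply is_derive_eq.
    - apply is_derive_Rminus; [apply is_derive_Rminus; [apply Hg|]|apply is_derive_RInt_upper; auto].
      apply is_derive_Rmult; [apply Hh|apply is_derive_jost_kernel; auto].
    - unfold jost_kernel. field. lra. }
  unfold F in HF. rewrite jost_kernel_diag, RInt_point in HF. unfold zero in HF; simpl in HF. lra.
Qed.

Lemma jost_volterra_h k g h : jost_pair q k g h -> forall x X,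
  h x = h X * exp (-2 * k * X + 2 * k * x)
        + RInt (fun t => exp (-2 * k * t + 2 * k * x) * q t * g t) x X.
Proof.
  intros Hj x X. destruct Hj as [Hk Hg Hh _].
  assert (Hgc : forall x, continuous g x) by (intros y; exact (is_derive_continuous _ _ _ (Hg y))).
  assert (Hc : forall t, continuous (fun t => exp (-2 * k * t + 2 * k * x) * q t * g t) t) by solve_continuous.
  set (F := fun y => h y * exp (-2 * k * y + 2 * k * x)
                     + RInt (fun t => exp (-2 * k * t + 2 * k * x) * q t * g t) x y).
  assert (HF : F x = F X).
  { apply eq_of_is_derive_0. intros y. unfold F. eapply is_derive_eq.
    - apply is_derive_Rplus; [|apply is_derive_RInt_upper; auto].
      apply is_derive_Rmult; [apply Hh|apply is_derive_exp_affine].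
    - cbv beta. ring. }
  unfold F in HF. rewrite RInt_point in HF. unfold zero in HF; simpl in HF.
  replace (-2 * k * x + 2 * k * x) with 0 in HF by ring. rewrite exp_0 in HF. lra.
Qed.

Lemma jost_gronwall (k L s : R) (u A : R -> R) :
  0 < k -> (forall x, continuous u x) -> (forall X, 0 <= A X) ->
  (forall y X, s <= y <= X -> u y <= A X + RInt (fun t => q t / (2 * k) * u t) y X) ->
  (forall eps, 0 < eps -> exists M, forall X, M <= X -> A X <= L + eps) ->
  u s <= L * exp (Qb / k).
Proof.
  intros Hk Hu HA0 Hint HA. set (E := exp (Qb / k)). assert (HE : 0 < E) by apply exp_pos.
  apply (le_of_eventually_le _ _ s (fun X => A X * E)).
  - intros X HX. eapply Rle_trans.
    + apply (gronwall_backward u (fun t => q t / (2 * k)) (fun t => - / (2 * k) * Q t) (A X) s X HX Hu).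
      * solve_continuous.
      * intros x. apply Rmult_le_pos; [apply (pot_nonneg _ _ _ Hq)|left; apply Rinv_0_lt_compat; lra].
      * intros x. eapply is_derive_eq; [apply (is_derive_scal (fun t => Q t) x (- / (2 * k)))|].
        -- apply (pot_primitive _ _ _ Hq).
        -- unfold scal; simpl; unfold mult; simpl. field. lra.
      * intros y Hy. now apply Hint.
    + apply Rmult_le_compat_l; [apply HA0|]. apply exp_le_exp_of_le.
      pose proof (pot_primitive_bound _ _ _ Hq s) as Hs. pose proof (pot_primitive_bound _ _ _ Hq X) as HX'.
      apply Rabs_le_between in Hs. apply Rabs_le_between in HX'.
      apply (Rmult_le_reg_l (2 * k)); [lra|]. field_simplify; lra.
  - intros eps He. destruct (HA (eps / E)) as [M HM]; [apply Rdiv_lt_0_compat; lra|].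
    exists M. intros X HX. specialize (HM X HX).
    apply Rle_trans with ((L + eps / E) * E); [apply Rmult_le_compat_r; lra|].
    right. field. lra.
Qed.

Lemma jost_eventually_near k g h : jost_pair q k g h ->
  forall eps, 0 < eps -> exists M, forall X, M <= X -> Rabs (g X - 1) <= eps /\ Rabs (h X) / (2 * k) <= eps.
Proof.
  intros Hj eps He. pose proof (jost_k_pos _ _ _ _ Hj) as Hk.
  destruct (eventually_and _ _ (jost_g_lim _ _ _ _ Hj eps He)
    (jost_h_vanishes k g h Hj (2 * k * eps) ltac:(nra))) as [M HM].
  exists M. intros X HX. destruct (HM X HX) as [H1 H2]. split; auto.
  apply (Rmult_le_reg_l (2 * k)); [lra|]. field_simplify; lra.
Qed.

Lemma abs_RInt_jost_kernel_le k (f : R -> R) y X : 0 < k -> y <= X -> (forall x, continuous f x) ->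
  Rabs (RInt (fun t => jost_kernel k y t * q t * f t) y X) <= RInt (fun t => q t / (2 * k) * Rabs (f t)) y X.
Proof.
  intros Hk HyX Hf. apply abs_RInt_le_RInt; auto; [solve_continuous..|].
  intros t Ht. destruct (jost_kernel_bounds k y t Hk ltac:(lra)) as [K0 K1].
  pose proof (pot_nonneg _ _ _ Hq t). pose proof (Rabs_pos (f t)).
  rewrite !Rabs_mult, (Rabs_right (jost_kernel k y t)), (Rabs_right (q t)) by lra.
  unfold Rdiv. replace (q t * / (2 * k) * Rabs (f t)) with (/ (2 * k) * q t * Rabs (f t)) by ring.
  apply Rmult_le_compat_r; [lra|]. apply Rmult_le_compat_r; lra.
Qed.

Lemma jost_g_bound k g h : jost_pair q k g h -> forall s, Rabs (g s) <= exp (Qb / k).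
Proof.
  intros Hj s. pose proof (jost_k_pos _ _ _ _ Hj) as Hk. rewrite <- (Rmult_1_l (exp _)).
  apply (jost_gronwall k 1 s (fun t => Rabs (g t)) (fun X => Rabs (g X) + Rabs (h X) / (2 * k))); auto.
  - intros x. apply continuous_Rabs_comp, (jost_continuous_g k g h Hj).
  - intros X. apply Rplus_le_le_0_compat; [apply Rabs_pos|].
    apply Rmult_le_pos; [apply Rabs_pos|left; apply Rinv_0_lt_compat; lra].
  - intros y X Hy. rewrite (jost_volterra_g k g h Hj y X).
    pose proof (abs_RInt_jost_kernel_le k g y X Hk (proj2 Hy) (jost_continuous_g k g h Hj)).
    pose proof (Rabs_mult_jost_kernel_le k y X (h X) Hk (proj2 Hy)).
    pose proof (Rabs_bounds (g X)). pose proof (Rabs_bounds (h X * jost_kernel k y X)).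
    pose proof (Rabs_bounds (RInt (fun t => jost_kernel k y t * q t * g t) y X)).
    apply Rabs_le_between. split; lra.
  - intros eps He. destruct (jost_eventually_near k g h Hj (eps / 2) ltac:(lra)) as [M HM].
    exists M. intros X HX. destruct (HM X HX) as [H1 H2].
    apply Rabs_le_between in H1. assert (Rabs (g X) <= 1 + eps / 2) by (apply Rabs_le_between; lra). lra.
Qed.

Definition lip_g (m : R) := exp (Qb / m) * Qb / (m * m) * exp (Qb / m).
Definition lip_h (m : R) := 2 * Qb * (exp (Qb / m) / m + lip_g m).

Lemma lip_g_nonneg m : 0 < m -> 0 <= lip_g m.
Proof.
  intros Hm. pose proof Qb_nonneg. pose proof (exp_pos (Qb / m)). unfold lip_g, Rdiv.
  assert (0 < / (m * m)) by (apply Rinv_0_lt_compat; nra).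
  apply Rmult_le_pos; [|lra]. apply Rmult_le_pos; [apply Rmult_le_pos|]; lra.
Qed.

Lemma exp_Qb_div_le m k : 0 < m -> m <= k -> exp (Qb / k) <= exp (Qb / m).
Proof.
  intros Hm Hk. apply exp_le_exp_of_le. unfold Rdiv.
  apply Rmult_le_compat_l; [apply Qb_nonneg|]. apply Rinv_le_contravar; lra.
Qed.

Section Two_pairs.

Variables (m k1 k2 : R) (g1 h1 g2 h2 : R -> R).
Hypothesis Hj1 : jost_pair q k1 g1 h1.
Hypothesis Hj2 : jost_pair q k2 g2 h2.
Hypothesis Hm : 0 < m.
Hypothesis Hmk1 : m <= k1.
Hypothesis Hmk2 : m <= k2.

Lemma abs_RInt_jost_kernel_sub_le y X : y <= X ->
  Rabs (RInt (fun t => (jost_kernel k1 y t - jost_kernel k2 y t) * q t * g2 t) y X)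
  <= Rabs (k1 - k2) * exp (Qb / m) * Qb / (m * m).
Proof.
  intros HyX. pose proof (jost_k_pos _ _ _ _ Hj1). pose proof (jost_k_pos _ _ _ _ Hj2).
  set (c := Rabs (k1 - k2) / (2 * (m * m)) * exp (Qb / m)).
  assert (Hc : 0 <= c).
  { apply Rmult_le_pos; [apply Rmult_le_pos; [apply Rabs_pos|]|left; apply exp_pos].
    left; apply Rinv_0_lt_compat; nra. }
  pose proof (jost_continuous_g _ _ _ Hj2).
  eapply Rle_trans; [apply (abs_RInt_le_RInt _ (fun t => c * q t)); auto; [solve_continuous..|]|].
  - intros t Ht. pose proof (pot_nonneg _ _ _ Hq t).
    pose proof (jost_kernel_lipschitz m k1 k2 y t Hm Hmk1 Hmk2 ltac:(lra)).
    pose proof (Rabs_pos (jost_kernel k1 y t - jost_kernel k2 y t)).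
    pose proof (Rle_trans _ _ _ (jost_g_bound k2 g2 h2 Hj2 t) (exp_Qb_div_le m k2 Hm Hmk2)).
    rewrite !Rabs_mult, (Rabs_right (q t)) by lra. unfold c.
    replace (Rabs (k1 - k2) / (2 * (m * m)) * exp (Qb / m) * q t)
      with (Rabs (k1 - k2) / (2 * (m * m)) * q t * exp (Qb / m)) by ring.
    apply Rmult_le_compat; try apply Rmult_le_pos; try apply Rabs_pos; auto.
    apply Rmult_le_compat_r; lra.
  - rewrite (RInt_Rmult_l q q_continuous).
    eapply Rle_trans; [apply Rmult_le_compat_l; [exact Hc|apply RInt_pot_le]|].
    right. unfold c. field. lra.
Qed.

Lemma jost_volterra_g_sub_le y X : y <= X ->
  Rabs (g1 y - g2 y) <= Rabs (g1 X - g2 X) + Rabs (h1 X) / (2 * k1) + Rabs (h2 X) / (2 * k2)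
    + Rabs (k1 - k2) * exp (Qb / m) * Qb / (m * m)
    + RInt (fun t => q t / (2 * k1) * Rabs (g1 t - g2 t)) y X.
Proof.
  intros HyX. pose proof (jost_k_pos _ _ _ _ Hj1) as Hk1. pose proof (jost_k_pos _ _ _ _ Hj2) as Hk2.
  pose proof (jost_continuous_g _ _ _ Hj1). pose proof (jost_continuous_g _ _ _ Hj2).
  rewrite (jost_volterra_g k1 g1 h1 Hj1 y X), (jost_volterra_g k2 g2 h2 Hj2 y X).
  replace (RInt (fun t => jost_kernel k1 y t * q t * g1 t) y X)
    with (RInt (fun t => jost_kernel k1 y t * q t * (g1 t - g2 t)) y X
          + RInt (fun t => (jost_kernel k1 y t - jost_kernel k2 y t) * q t * g2 t) y X
          + RInt (fun t => jost_kernel k2 y t * q t * g2 t) y X)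
    by (rewrite <- !RInt_Rplus; [apply RInt_ext; intros t _; simpl; ring|solve_continuous..]).
  pose proof (abs_RInt_jost_kernel_le k1 (fun t => g1 t - g2 t) y X Hk1 HyX ltac:(solve_continuous)).
  pose proof (abs_RInt_jost_kernel_sub_le y X HyX).
  pose proof (Rabs_mult_jost_kernel_le k1 y X (h1 X) Hk1 HyX).
  pose proof (Rabs_mult_jost_kernel_le k2 y X (h2 X) Hk2 HyX).
  pose proof (Rabs_bounds (g1 X - g2 X)). pose proof (Rabs_bounds (h1 X * jost_kernel k1 y X)).
  pose proof (Rabs_bounds (h2 X * jost_kernel k2 y X)).
  pose proof (Rabs_bounds (RInt (fun t => jost_kernel k1 y t * q t * (g1 t - g2 t)) y X)).
  pose proof (Rabs_bounds (RInt (fun t => (jost_kernel k1 y t - jost_kernel k2 y t) * q t * g2 t) y X)).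
  cbv beta in *. apply Rabs_le_between. split; lra.
Qed.

Lemma jost_g_lipschitz s : Rabs (g1 s - g2 s) <= Rabs (k1 - k2) * lip_g m.
Proof.
  pose proof (jost_k_pos _ _ _ _ Hj1) as Hk1. pose proof (jost_k_pos _ _ _ _ Hj2) as Hk2.
  pose proof (jost_continuous_g _ _ _ Hj1). pose proof (jost_continuous_g _ _ _ Hj2).
  set (C0 := Rabs (k1 - k2) * exp (Qb / m) * Qb / (m * m)).
  assert (E : Rabs (k1 - k2) * lip_g m = C0 * exp (Qb / m)) by (unfold C0, lip_g; field; lra).
  assert (HC0 : 0 <= C0).
  { pose proof (lip_g_nonneg m Hm). pose proof (Rabs_pos (k1 - k2)). pose proof (exp_pos (Qb / m)). nra. }
  rewrite E. apply Rle_trans with (C0 * exp (Qb / k1));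
    [|apply Rmult_le_compat_l; [|apply exp_Qb_div_le]; auto].
  apply (jost_gronwall k1 C0 s (fun t => Rabs (g1 t - g2 t))
    (fun X => Rabs (g1 X - g2 X) + Rabs (h1 X) / (2 * k1) + Rabs (h2 X) / (2 * k2) + C0)); auto.
  - solve_continuous.
  - intros X. assert (Hnn : forall k h, 0 < k -> 0 <= Rabs h / (2 * k)).
    { intros k h Hk. apply Rmult_le_pos; [apply Rabs_pos|left; apply Rinv_0_lt_compat; lra]. }
    pose proof (Rabs_pos (g1 X - g2 X)). pose proof (Hnn k1 (h1 X) Hk1). pose proof (Hnn k2 (h2 X) Hk2). lra.
  - intros y X Hy. exact (jost_volterra_g_sub_le y X (proj2 Hy)).
  - intros eps He. destruct (eventually_and _ _ (jost_eventually_near k1 g1 h1 Hj1 (eps / 4) ltac:(lra))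
      (jost_eventually_near k2 g2 h2 Hj2 (eps / 4) ltac:(lra))) as [M HM].
    exists M. intros X HX. destruct (HM X HX) as [[Hg1 Hh1] [Hg2 Hh2]].
    assert (Rabs (g1 X - g2 X) <= eps / 2); [|lra].
    replace (g1 X - g2 X) with ((g1 X - 1) - (g2 X - 1)) by ring.
    eapply Rle_trans; [apply Rabs_triang|]. rewrite Rabs_Ropp. lra.
Qed.

Lemma abs_RInt_damped_sub_le x X : x <= X ->
  Rabs (RInt (fun t => exp (-2 * k1 * t + 2 * k1 * x) * q t * g1 t
                       - exp (-2 * k2 * t + 2 * k2 * x) * q t * g2 t) x X)
  <= Rabs (k1 - k2) * lip_h m.
Proof.
  intros HxX. pose proof (jost_k_pos _ _ _ _ Hj2) as Hk2.
  pose proof (jost_continuous_g _ _ _ Hj1). pose proof (jost_continuous_g _ _ _ Hj2).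
  set (G := exp (Qb / m)). assert (HG : 0 < G) by apply exp_pos.
  set (c := Rabs (k1 - k2) * (G / m + lip_g m)).
  assert (Hc : 0 <= c).
  { apply Rmult_le_pos; [apply Rabs_pos|]. pose proof (lip_g_nonneg m Hm).
    assert (0 <= G / m) by (apply Rmult_le_pos; [lra|left; apply Rinv_0_lt_compat; lra]). lra. }
  eapply Rle_trans; [apply (abs_RInt_le_RInt _ (fun t => c * q t)); auto; [solve_continuous..|]|].
  - intros t Ht. destruct (exp_damping_bounds k2 x t Hk2 ltac:(lra)).
    pose proof (pot_nonneg _ _ _ Hq t).
    pose proof (exp_damping_lipschitz m k1 k2 x t Hm Hmk1 Hmk2 ltac:(lra)).
    pose proof (Rle_trans _ _ _ (jost_g_bound k1 g1 h1 Hj1 t) (exp_Qb_div_le m k1 Hm Hmk1)) as Hg1.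
    fold G in Hg1. pose proof (jost_g_lipschitz t).
    replace (exp (-2 * k1 * t + 2 * k1 * x) * q t * g1 t - exp (-2 * k2 * t + 2 * k2 * x) * q t * g2 t)
      with ((exp (-2 * k1 * t + 2 * k1 * x) - exp (-2 * k2 * t + 2 * k2 * x)) * q t * g1 t
            + exp (-2 * k2 * t + 2 * k2 * x) * q t * (g1 t - g2 t)) by ring.
    eapply Rle_trans; [apply Rabs_triang|].
    rewrite !Rabs_mult, (Rabs_right (q t)), (Rabs_right (exp _)) by lra.
    replace (c * q t) with (Rabs (k1 - k2) / m * q t * G + 1 * q t * (Rabs (k1 - k2) * lip_g m))
      by (unfold c; field; lra).
    pose proof (Rabs_pos (g1 t)). pose proof (Rabs_pos (g1 t - g2 t)).
    pose proof (Rabs_pos (exp (-2 * k1 * t + 2 * k1 * x) - exp (-2 * k2 * t + 2 * k2 * x))).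
    apply Rplus_le_compat; (apply Rmult_le_compat; [apply Rmult_le_pos|..]; try lra);
      apply Rmult_le_compat_r; lra.
  - rewrite (RInt_Rmult_l q q_continuous).
    eapply Rle_trans; [apply Rmult_le_compat_l; [exact Hc|apply RInt_pot_le]|].
    right. unfold c, lip_h. fold G. ring.
Qed.

Lemma jost_h_lipschitz x : Rabs (h1 x - h2 x) <= Rabs (k1 - k2) * lip_h m.
Proof.
  pose proof (jost_k_pos _ _ _ _ Hj1) as Hk1. pose proof (jost_k_pos _ _ _ _ Hj2) as Hk2.
  pose proof (jost_continuous_g _ _ _ Hj1). pose proof (jost_continuous_g _ _ _ Hj2).
  apply (le_of_eventually_le _ _ x (fun X => Rabs (h1 X) + Rabs (h2 X) + Rabs (k1 - k2) * lip_h m)).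
  - intros X HX. rewrite (jost_volterra_h k1 g1 h1 Hj1 x X), (jost_volterra_h k2 g2 h2 Hj2 x X).
    destruct (exp_damping_bounds k1 x X Hk1 HX). destruct (exp_damping_bounds k2 x X Hk2 HX).
    pose proof (abs_RInt_damped_sub_le x X HX) as HI. rewrite RInt_Rminus in HI by solve_continuous.
    set (I1 := RInt (fun t => exp (-2 * k1 * t + 2 * k1 * x) * q t * g1 t) x X) in *.
    set (I2 := RInt (fun t => exp (-2 * k2 * t + 2 * k2 * x) * q t * g2 t) x X) in *.
    assert (Rabs (h1 X * exp (-2 * k1 * X + 2 * k1 * x)) <= Rabs (h1 X)).
    { rewrite Rabs_mult, (Rabs_right (exp _)) by lra. pose proof (Rabs_pos (h1 X)). nra. }
    assert (Rabs (h2 X * exp (-2 * k2 * X + 2 * k2 * x)) <= Rabs (h2 X)).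
    { rewrite Rabs_mult, (Rabs_right (exp _)) by lra. pose proof (Rabs_pos (h2 X)). nra. }
    pose proof (Rabs_bounds (h1 X * exp (-2 * k1 * X + 2 * k1 * x))).
    pose proof (Rabs_bounds (h2 X * exp (-2 * k2 * X + 2 * k2 * x))). pose proof (Rabs_bounds (I1 - I2)).
    apply Rabs_le_between. split; lra.
  - intros eps He. destruct (eventually_and _ _ (jost_h_vanishes k1 g1 h1 Hj1 (eps / 2) ltac:(lra))
      (jost_h_vanishes k2 g2 h2 Hj2 (eps / 2) ltac:(lra))) as [M HM].
    exists M. intros X HX. destruct (HM X HX). lra.
Qed.

End Two_pairs.

End Jost.

(** * The sech^2 potential *)

Definition sech2_coeff (p : R) := (2 * p + 1) * (p + 1).
Definition sech2_pot (p x : R) := sech2_coeff p * sech (p * x) ^ 2.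
(* [sech2_prim p x = sech2_coeff p / p * tanh (p x)] *)
Definition sech2_prim (p x : R) := sech2_coeff p / p * ((exp (2 * p * x) - 1) / (exp (2 * p * x) + 1)).

Lemma sech2_coeff_pos p : 0 < p -> 0 < sech2_coeff p.
Proof. intros Hp. unfold sech2_coeff. nra. Qed.

Lemma cosh_ge_1 y : 1 <= cosh y.
Proof.
  unfold cosh. pose proof (exp_ineq1_le y). pose proof (exp_ineq1_le (- y)).
  pose proof (exp_pos y). pose proof (exp_pos (- y)).
  assert (E : exp y * exp (- y) = 1) by (rewrite <- exp_plus, <- exp_0; f_equal; ring). nra.
Qed.

Lemma sech2_pot_exp p x :
  sech2_pot p x = 4 * sech2_coeff p * exp (2 * p * x) / (exp (2 * p * x) + 1) ^ 2.
Proof.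
  unfold sech2_pot, sech, cosh. set (a := exp (p * x)). assert (Ha : 0 < a) by apply exp_pos.
  replace (exp (2 * p * x)) with (a * a) by (unfold a; rewrite <- exp_plus; f_equal; ring).
  replace (exp (- (p * x))) with (/ a) by (unfold a; rewrite exp_Ropp; reflexivity).
  field. split; nra.
Qed.

Lemma is_derive_sech2_prim p x : 0 < p -> is_derive (sech2_prim p) x (sech2_pot p x).
Proof.
  intros Hp. pose proof (exp_pos (2 * p * x)). rewrite sech2_pot_exp. unfold sech2_prim.
  auto_derive; [lra|]. field. split; lra.
Qed.

Lemma continuous_sech2_pot p x : continuous (sech2_pot p) x.
Proof.
  pose proof (exp_pos (2 * p * x)).
  apply (is_derive_continuous _ _
    (4 * sech2_coeff p * exp (2 * p * x) * (2 * p) * (1 - exp (2 * p * x)) / (exp (2 * p * x) + 1) ^ 3)).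
  eapply is_derive_ext; [intros t; symmetry; apply sech2_pot_exp|].
  auto_derive; [nra|]. field. nra.
Qed.

Lemma Rabs_sech2_prim_le p x : 0 < p -> Rabs (sech2_prim p x) <= sech2_coeff p / p.
Proof.
  intros Hp. pose proof (exp_pos (2 * p * x)).
  assert (Hc : 0 <= sech2_coeff p / p).
  { apply Rlt_le, Rdiv_lt_0_compat; [apply sech2_coeff_pos|]; lra. }
  unfold sech2_prim. rewrite Rabs_mult, (Rabs_right (sech2_coeff p / p)) by lra.
  rewrite <- (Rmult_1_r (sech2_coeff p / p)) at 2. apply Rmult_le_compat_l; [lra|].
  assert (E : (exp (2 * p * x) - 1) / (exp (2 * p * x) + 1) * (exp (2 * p * x) + 1) = exp (2 * p * x) - 1)
    by (field; lra).
  apply Rabs_le_between. split; apply (Rmult_le_reg_r (exp (2 * p * x) + 1)); lra.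
Qed.

(* [sech^2 y <= 1 / cosh y <= 2 / (1 + y)] for [y >= 0] *)
Lemma sech2_pot_vanishes p : 0 < p ->
  forall eps, 0 < eps -> exists M, forall x, M <= x -> sech2_pot p x <= eps.
Proof.
  intros Hp eps He. set (c := sech2_coeff p). assert (Hc : 0 < c) by now apply sech2_coeff_pos.
  exists (2 * c / eps / p). intros x Hx.
  assert (Hpx : 2 * c / eps <= p * x).
  { apply (Rmult_le_compat_l p) in Hx; [|lra]. replace (p * (2 * c / eps / p)) with (2 * c / eps) in Hx
      by (field; lra). lra. }
  assert (Hce : 0 < 2 * c / eps) by (apply Rdiv_lt_0_compat; lra).
  set (C := cosh (p * x)).
  assert (HC : (1 + p * x) / 2 <= C).
  { unfold C, cosh. pose proof (exp_ineq1_le (p * x)). pose proof (exp_pos (- (p * x))). lra. }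
  pose proof (cosh_ge_1 (p * x)) as HC1. fold C in HC1.
  unfold sech2_pot, sech. fold c C. simpl. rewrite Rmult_1_r.
  replace (c * (/ C * / C)) with (c / (C * C)) by (field; lra).
  apply (Rmult_le_reg_r (C * C)); [nra|]. unfold Rdiv. rewrite Rmult_assoc, Rinv_l by nra.
  assert (c <= eps * C).
  { apply (Rmult_le_reg_l (2 / eps)); [apply Rdiv_lt_0_compat; lra|].
    replace (2 / eps * c) with (2 * c / eps) by (field; lra).
    replace (2 / eps * (eps * C)) with (2 * C) by (field; lra). lra. }
  nra.
Qed.

Lemma sech2_pot_admissible p : 0 < p ->
  admissible_potential (sech2_pot p) (sech2_prim p) (sech2_coeff p / p).
Proof.
  intros Hp. split.
  - apply continuous_sech2_pot.
  - intros x. unfold sech2_pot. apply Rmult_le_pos; [left; now apply sech2_coeff_pos|apply pow2_ge_0].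
  - intros x. now apply is_derive_sech2_prim.
  - intros x. now apply Rabs_sech2_prim_le.
  - now apply sech2_pot_vanishes.
Qed.

(** * Joint continuity of the normalized solutions *)

Definition decay (lam : R) := sqrt (1 - lam).

Lemma decay_pos lam : lam < 1 -> 0 < decay lam.
Proof. intros H. apply sqrt_lt_R0. lra. Qed.

Lemma decay_sq lam : lam < 1 -> decay lam * decay lam = 1 - lam.
Proof. intros H. apply sqrt_sqrt. lra. Qed.

Lemma decay_antitone l1 l2 : l1 <= l2 -> l2 < 1 -> decay l2 <= decay l1.
Proof. intros H1 H2. apply sqrt_le_1_alt. lra. Qed.

Lemma continuity_pt_decay lam : lam < 1 -> continuity_pt decay lam.
Proof.
  intros Hl. apply (is_derive_continuity_pt decay lam (- / (2 * sqrt (1 - lam)))). unfold decay.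
  auto_derive; [lra|]. replace (1 + - lam) with (1 - lam) by ring.
  field. apply Rgt_not_eq, sqrt_lt_R0. lra.
Qed.

Lemma decay_near l0 l : l0 < 1 -> Rabs (l - l0) < (1 - l0) / 2 ->
  l < 1 /\ decay ((1 + l0) / 2) <= decay l.
Proof. intros H1 H2. apply Rabs_lt_between in H2. split; [lra|]. apply decay_antitone; lra. Qed.

Section Solutions.

Variables (p : R) (v : R -> R -> R).
Hypothesis Hp : 0 < p.
Hypothesis Hv : forall lam, lam < 1 ->
  solves_ode p lam (fun x => v x lam) /\ normalized_at_pinfty lam (fun x => v x lam).
Let Hpot := sech2_pot_admissible p Hp.

Definition dv (lam x : R) := Derive (fun y => v y lam) x.
Definition jost_g (lam x : R) := v x lam * exp (decay lam * x).
Definition jost_h (lam x : R) := (dv lam x + decay lam * v x lam) * exp (decay lam * x).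

Lemma is_derive_v lam x : lam < 1 -> is_derive (fun y => v y lam) x (dv lam x).
Proof. intros Hl. apply Derive_correct, (proj1 (proj1 (Hv lam Hl) x)). Qed.

Lemma is_derive_dv lam x : lam < 1 -> is_derive (dv lam) x ((1 - lam - sech2_pot p x) * v x lam).
Proof.
  intros Hl. destruct (proj2 (proj1 (Hv lam Hl) x)) as [d2 [Hd2 Heq]].
  eapply is_derive_eq; [exact Hd2|]. unfold sech2_pot, sech2_coeff. lra.
Qed.

Lemma continuous_v lam x : lam < 1 -> continuous (fun y => v y lam) x.
Proof. intros Hl. exact (is_derive_continuous _ _ _ (is_derive_v lam x Hl)). Qed.

Lemma jost_pair_of_solution lam : lam < 1 ->
  jost_pair (sech2_pot p) (decay lam) (jost_g lam) (jost_h lam).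
Proof.
  intros Hl. pose proof (decay_sq lam Hl) as Hk2. split.
  - now apply decay_pos.
  - intros x. unfold jost_g, jost_h. eapply is_derive_eq.
    + apply is_derive_Rmult; [apply is_derive_v; auto|apply is_derive_exp_lin].
    + cbv beta. ring.
  - intros x. unfold jost_h, jost_g. eapply is_derive_eq.
    + apply is_derive_Rmult; [apply is_derive_Rplus|].
      * apply is_derive_dv; auto.
      * apply (is_derive_scal (fun y => v y lam)), is_derive_v; auto.
      * apply is_derive_exp_lin.
    + unfold scal; simpl; unfold mult; simpl. replace (1 - lam) with (decay lam * decay lam) by lra. ring.
  - intros eps He. destruct (proj2 (is_lim_spec _ _ _) (proj2 (Hv lam Hl)) (mkposreal eps He)) as [M HM].
    exists (M + 1). intros x Hx. left. apply HM. lra.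
Qed.

Lemma v_eq_jost_g lam x : v x lam = jost_g lam x * exp (- decay lam * x).
Proof.
  unfold jost_g. rewrite Rmult_assoc, <- exp_plus.
  replace (decay lam * x + - decay lam * x) with 0 by ring. rewrite exp_0. ring.
Qed.

Lemma dv_eq_jost_h lam x : dv lam x = jost_h lam x * exp (- decay lam * x) - decay lam * v x lam.
Proof.
  unfold jost_h. rewrite Rmult_assoc, <- exp_plus.
  replace (decay lam * x + - decay lam * x) with 0 by ring. rewrite exp_0. ring.
Qed.

Definition v_const (lam : R) := exp (sech2_coeff p / p / decay lam).

Lemma Rabs_v_le lam t : lam < 1 -> Rabs (v t lam) <= v_const lam * exp (- decay lam * t).
Proof.
  intros Hl. rewrite v_eq_jost_g, Rabs_mult, (Rabs_right (exp _)) by (left; apply exp_pos).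
  apply Rmult_le_compat_r; [left; apply exp_pos|].
  exact (jost_g_bound _ _ _ Hpot _ _ _ (jost_pair_of_solution lam Hl) t).
Qed.

Lemma is_lim_v lam : lam < 1 -> is_lim (fun X => v X lam) p_infty 0.
Proof.
  intros Hl. eapply is_lim_ext; [intros X; symmetry; apply v_eq_jost_g|].
  replace (Finite 0) with (Rbar_mult 1 0) by (simpl; f_equal; ring).
  apply is_lim_mult; [apply (proj2 (Hv lam Hl))|apply is_lim_exp_neg, decay_pos; auto|exact I].
Qed.

Lemma is_lim_dv lam : lam < 1 -> is_lim (dv lam) p_infty 0.
Proof.
  intros Hl. eapply is_lim_ext; [intros X; symmetry; apply dv_eq_jost_h|].
  replace (Finite 0) with (Finite (0 * 0 - decay lam * 0)) by (f_equal; ring).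
  apply is_lim_minus'; [apply (is_lim_mult _ _ _ 0 0); [|apply is_lim_exp_neg, decay_pos; auto|exact I]
                       |apply (is_lim_scal_l _ _ _ 0), is_lim_v; auto].
  apply is_lim_of_eventually_le. intros eps He. setoid_rewrite Rminus_0_r.
  exact (jost_h_vanishes _ _ _ Hpot _ _ _ (jost_pair_of_solution lam Hl) eps He).
Qed.

Lemma continuity_2d_exp_decay x0 l0 : l0 < 1 ->
  continuity_2d_pt (fun x l => exp (- decay l * x)) x0 l0.
Proof.
  intros Hl0. apply (continuity_1d_2d_pt_comp exp (fun x l => - decay l * x)).
  - exact (is_derive_continuity_pt _ _ _ (is_derive_exp _)).
  - apply continuity_2d_pt_mult; [apply continuity_2d_pt_opp|apply continuity_2d_pt_id1].
    now apply continuity_2d_pt_param, continuity_pt_decay.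
Qed.

Lemma continuity_2d_jost_g x0 l0 : l0 < 1 -> continuity_2d_pt (fun x l => jost_g l x) x0 l0.
Proof.
  intros Hl0. set (m := decay ((1 + l0) / 2)).
  assert (Hm : 0 < m) by (apply decay_pos; lra).
  assert (Hm0 : m <= decay l0) by (apply decay_antitone; lra).
  apply (continuity_2d_pt_of_lipschitz _ decay (lip_g (sech2_coeff p / p) m) x0 l0 ((1 - l0) / 2));
    [lra|now apply continuity_pt_decay| |].
  - intros x. exact (is_derive_continuity_pt _ _ _ (jost_dg _ _ _ _ (jost_pair_of_solution l0 Hl0) x)).
  - intros l x Hl. destruct (decay_near l0 l Hl0 Hl) as [Hl1 Hml].
    exact (jost_g_lipschitz _ _ _ Hpot m _ _ _ _ _ _
      (jost_pair_of_solution l Hl1) (jost_pair_of_solution l0 Hl0) Hm Hml Hm0 x).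
Qed.

Lemma continuity_2d_jost_h x0 l0 : l0 < 1 -> continuity_2d_pt (fun x l => jost_h l x) x0 l0.
Proof.
  intros Hl0. set (m := decay ((1 + l0) / 2)).
  assert (Hm : 0 < m) by (apply decay_pos; lra).
  assert (Hm0 : m <= decay l0) by (apply decay_antitone; lra).
  apply (continuity_2d_pt_of_lipschitz _ decay (lip_h (sech2_coeff p / p) m) x0 l0 ((1 - l0) / 2));
    [lra|now apply continuity_pt_decay| |].
  - intros x. exact (is_derive_continuity_pt _ _ _ (jost_dh _ _ _ _ (jost_pair_of_solution l0 Hl0) x)).
  - intros l x Hl. destruct (decay_near l0 l Hl0 Hl) as [Hl1 Hml].
    exact (jost_h_lipschitz _ _ _ Hpot m _ _ _ _ _ _
      (jost_pair_of_solution l Hl1) (jost_pair_of_solution l0 Hl0) Hm Hml Hm0 x).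
Qed.

Lemma continuity_2d_v x0 l0 : l0 < 1 -> continuity_2d_pt v x0 l0.
Proof.
  intros Hl0. apply (continuity_2d_pt_ext (fun x l => jost_g l x * exp (- decay l * x)));
    [intros; symmetry; apply v_eq_jost_g|].
  apply continuity_2d_pt_mult; [apply continuity_2d_jost_g|apply continuity_2d_exp_decay]; auto.
Qed.

Lemma continuity_2d_dv x0 l0 : l0 < 1 -> continuity_2d_pt (fun x l => dv l x) x0 l0.
Proof.
  intros Hl0. apply (continuity_2d_pt_ext (fun x l => jost_h l x * exp (- decay l * x) - decay l * v x l));
    [intros; symmetry; apply dv_eq_jost_h|].
  apply continuity_2d_pt_minus; apply continuity_2d_pt_mult.
  - now apply continuity_2d_jost_h.
  - now apply continuity_2d_exp_decay.
  - now apply continuity_2d_pt_param, continuity_pt_decay.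
  - now apply continuity_2d_v.
Qed.

(** * The Wronskian identity *)

Definition tail_bound (l mu a : R) :=
  v_const l * v_const mu * exp (- (decay l + decay mu) * a) / (decay l + decay mu).

Lemma continuous_vv l mu : l < 1 -> mu < 1 -> forall t, continuous (fun t : R => v t l * v t mu) t.
Proof. intros Hl Hmu t. apply continuous_Rmult; now apply continuous_v. Qed.

Lemma abs_RInt_vv_le l mu a b : l < 1 -> mu < 1 -> a <= b ->
  Rabs (RInt (fun t => v t l * v t mu) a b) <= tail_bound l mu a.
Proof.
  intros Hl Hmu Hab. pose proof (decay_pos l Hl). pose proof (decay_pos mu Hmu).
  set (A := decay l + decay mu). set (C := v_const l * v_const mu).
  assert (HC : 0 < C) by (apply Rmult_lt_0_compat; apply exp_pos).
  eapply Rle_trans; [apply (abs_RInt_le_RInt _ (fun t => C * exp (- A * t)))|].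
  - intros t; now apply continuous_vv.
  - intros t. apply continuous_Rmult; [apply continuous_const|].
    exact (is_derive_continuous _ _ _ (is_derive_exp_lin _ t)).
  - exact Hab.
  - intros t _. rewrite Rabs_mult.
    replace (C * exp (- A * t)) with ((v_const l * exp (- decay l * t)) * (v_const mu * exp (- decay mu * t)))
      by (unfold C, A; replace (- (decay l + decay mu) * t) with (- decay l * t + - decay mu * t) by ring;
          rewrite exp_plus; ring).
    apply Rmult_le_compat; try apply Rabs_pos; now apply Rabs_v_le.
  - rewrite RInt_Rmult_l by (intros t; exact (is_derive_continuous _ _ _ (is_derive_exp_lin _ t))).
    rewrite (is_RInt_unique _ a b ((exp (- A * a) - exp (- A * b)) / A)).
    + unfold tail_bound. fold A C. pose proof (exp_pos (- A * b)).
      unfold Rdiv. rewrite <- Rmult_assoc. apply Rmult_le_compat_r; [left; apply Rinv_0_lt_compat; unfold A|]; nra.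
    + replace ((exp (- A * a) - exp (- A * b)) / A)
        with (minus ((fun t => - exp (- A * t) / A) b) ((fun t => - exp (- A * t) / A) a))
        by (unfold minus, plus, opp; simpl; field; unfold A; lra).
      apply (is_RInt_derive (V := R_CompleteNormedModule) (fun t => - exp (- A * t) / A)).
      * intros x _. auto_derive; auto. field. unfold A; lra.
      * intros x _. exact (is_derive_continuous _ _ _ (is_derive_exp_lin _ x)).
Qed.

Lemma tail_bound_vanishes l mu eps : l < 1 -> mu < 1 -> 0 < eps ->
  exists M, forall X, M <= X -> tail_bound l mu X <= eps.
Proof.
  intros Hl Hmu He. pose proof (decay_pos l Hl). pose proof (decay_pos mu Hmu).
  set (C := v_const l * v_const mu / (decay l + decay mu)).
  assert (HC : 0 < C) by (apply Rdiv_lt_0_compat; [apply Rmult_lt_0_compat; apply exp_pos|lra]).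
  destruct (eventually_exp_neg_le (decay l + decay mu) (eps / C)) as [M [_ HM]];
    [lra|apply Rdiv_lt_0_compat; lra|].
  exists M. intros X HX. specialize (HM X HX).
  unfold tail_bound. replace (v_const l * v_const mu * exp (- (decay l + decay mu) * X) / (decay l + decay mu))
    with (C * exp (- (decay l + decay mu) * X)) by (unfold C; field; lra).
  apply Rle_trans with (C * (eps / C)); [apply Rmult_le_compat_l; lra|right; field; lra].
Qed.

Definition tail_integral (x l mu : R) :=
  real (Lim (fun X => RInt (fun t => v t l * v t mu) x X) p_infty).

Lemma is_lim_tail_integral x l mu : l < 1 -> mu < 1 ->
  is_lim (fun X => RInt (fun t => v t l * v t mu) x X) p_infty (tail_integral x l mu).
Proof.
  intros Hl Hmu. set (f := fun X => RInt (fun t => v t l * v t mu) x X).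
  assert (Hc := continuous_vv l mu Hl Hmu).
  assert (Hex : exists y, filterlim f (Rbar_locally p_infty) (locally y)).
  { apply (filterlim_locally_cauchy (F := Rbar_locally p_infty)). intros eps.
    destruct (tail_bound_vanishes l mu (eps / 2) Hl Hmu) as [M HM]; [apply is_pos_div_2|].
    exists (fun X => M <= X). split; [exists M; intros; lra|].
    intros a b Ha Hb. change (Rabs (f b - f a) < eps). unfold f.
    rewrite RInt_Chasles_sub by auto. pose proof (cond_pos eps).
    destruct (Rle_dec a b) as [Hab|Hab].
    - eapply Rle_lt_trans; [apply abs_RInt_vv_le; auto|]. specialize (HM a Ha). lra.
    - rewrite RInt_swap, Rabs_Ropp by auto.
      eapply Rle_lt_trans; [apply abs_RInt_vv_le; auto; lra|]. specialize (HM b Hb). lra. }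
  destruct Hex as [y Hy]. unfold tail_integral. fold f.
  rewrite (is_lim_unique f p_infty y Hy). exact Hy.
Qed.

Lemma abs_tail_integral_sub_le x l mu X : l < 1 -> mu < 1 -> x <= X ->
  Rabs (tail_integral x l mu - RInt (fun t => v t l * v t mu) x X) <= tail_bound l mu X.
Proof.
  intros Hl Hmu HxX. assert (Hc := continuous_vv l mu Hl Hmu).
  pose proof (proj2 (is_lim_spec _ _ _) (is_lim_tail_integral x l mu Hl Hmu)) as HJ.
  apply (le_of_eventually_le _ _ X
     (fun Y => Rabs (tail_integral x l mu - RInt (fun t => v t l * v t mu) x Y) + tail_bound l mu X)).
  - intros Y HY.
    replace (tail_integral x l mu - RInt (fun t => v t l * v t mu) x X)
      with ((tail_integral x l mu - RInt (fun t => v t l * v t mu) x Y)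
            + (RInt (fun t => v t l * v t mu) x Y - RInt (fun t => v t l * v t mu) x X)) by ring.
    eapply Rle_trans; [apply Rabs_triang|]. apply Rplus_le_compat_l.
    rewrite RInt_Chasles_sub by auto. now apply abs_RInt_vv_le.
  - intros eps He. destruct (HJ (mkposreal eps He)) as [M HM]. exists (M + 1). intros Y HY.
    specialize (HM Y ltac:(lra)). simpl in HM. rewrite Rabs_minus_sym. lra.
Qed.

Lemma is_derive_wronskian l mu y : l < 1 -> mu < 1 ->
  is_derive (fun y => v y l * dv mu y - dv l y * v y mu) y ((l - mu) * (v y l * v y mu)).
Proof.
  intros Hl Hmu. eapply is_derive_eq.
  - apply is_derive_Rminus; apply is_derive_Rmult.
    + now apply is_derive_v.
    + now apply is_derive_dv.
    + now apply is_derive_dv.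
    + now apply is_derive_v.
  - cbv beta. ring.
Qed.

Lemma wronskian_tail_integral x l mu : l < 1 -> mu < 1 ->
  v x l * dv mu x - dv l x * v x mu = (mu - l) * tail_integral x l mu.
Proof.
  intros Hl Hmu. assert (Hc := continuous_vv l mu Hl Hmu).
  set (F := fun X => v X l * dv mu X - dv l X * v X mu
                     - (l - mu) * RInt (fun t => v t l * v t mu) x X).
  assert (HF : forall X, F x = F X).
  { intros X. apply eq_of_is_derive_0. intros y. eapply is_derive_eq.
    - apply is_derive_Rminus; [apply is_derive_wronskian; auto|].
      apply (is_derive_scal (fun y => RInt (fun t => v t l * v t mu) x y)), is_derive_RInt_upper; auto.
    - unfold scal; simpl; unfold mult; simpl. ring. }
  (* [F] is constant and tends to [0 - (l - mu) J] at [+oo] *)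
  assert (Hlim : is_lim F p_infty (0 * 0 - 0 * 0 - (l - mu) * tail_integral x l mu)).
  { apply is_lim_minus'; [apply is_lim_minus'; apply (is_lim_mult _ _ _ 0 0)|].
    - now apply is_lim_v.
    - now apply is_lim_dv.
    - exact I.
    - now apply is_lim_dv.
    - now apply is_lim_v.
    - exact I.
    - apply (is_lim_scal_l _ _ _ (tail_integral x l mu)), is_lim_tail_integral; auto. }
  assert (Hconst : is_lim F p_infty (F x)).
  { apply (is_lim_ext (fun _ => F x)); [apply HF|apply is_lim_const]. }
  assert (E : Finite (F x) = Finite (0 * 0 - 0 * 0 - (l - mu) * tail_integral x l mu)).
  { now rewrite <- (is_lim_unique _ _ _ Hconst), <- (is_lim_unique _ _ _ Hlim). }
  injection E. unfold F. rewrite RInt_point. unfold zero; simpl. intros E'. lra.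
Qed.

Lemma RInt_le_tail_integral x l X : l < 1 -> x <= X ->
  RInt (fun t => v t l * v t l) x X <= tail_integral x l l.
Proof.
  intros Hl HxX. assert (Hc := continuous_vv l l Hl Hl).
  apply (is_lim_le_loc (fun _ => RInt (fun t => v t l * v t l) x X)
    (fun Y => RInt (fun t => v t l * v t l) x Y) p_infty (RInt (fun t => v t l * v t l) x X)
    (tail_integral x l l)); [|apply is_lim_const|apply is_lim_tail_integral; auto].
  exists X. intros Y HY. cbv beta. pose proof (RInt_Chasles_sub _ Hc x X Y).
  assert (0 <= RInt (fun t => v t l * v t l) X Y); [|lra].
  apply RInt_ge_0; [lra|apply ex_RInt_of_continuous; auto|intros; apply Rle_0_sqr].
Qed.

Lemma tail_integral_pos x l : l < 1 -> 0 < tail_integral x l l.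
Proof.
  intros Hl. assert (Hc := continuous_vv l l Hl Hl).
  destruct (jost_g_lim _ _ _ _ (jost_pair_of_solution l Hl) (1 / 2) ltac:(lra)) as [M HM].
  set (a := Rmax x M). assert (Hxa : x <= a) by apply Rmax_l. assert (HMa : M <= a) by apply Rmax_r.
  assert (Hpos : forall t, a <= t -> 0 < v t l * v t l).
  { intros t Ht. specialize (HM t ltac:(lra)). apply Rabs_le_between in HM.
    rewrite v_eq_jost_g. pose proof (exp_pos (- decay l * t)).
    assert (0 < jost_g l t * exp (- decay l * t)) by (apply Rmult_lt_0_compat; lra). nra. }
  eapply Rlt_le_trans; [|apply (RInt_le_tail_integral x l (a + 1)); auto; lra].
  pose proof (RInt_Chasles_sub _ Hc x a (a + 1)).
  assert (0 <= RInt (fun t => v t l * v t l) x a)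
    by (apply RInt_ge_0; [lra|apply ex_RInt_of_continuous; auto|intros; apply Rle_0_sqr]).
  assert (0 < RInt (fun t => v t l * v t l) a (a + 1))
    by (apply RInt_gt_0; [lra|intros; apply Hpos; lra|intros; auto]).
  lra.
Qed.

Lemma tail_bound_uniform l0 eps : l0 < 1 -> 0 < eps -> exists X0, forall X, X0 <= X ->
  forall l mu, Rabs (l - l0) < (1 - l0) / 2 -> Rabs (mu - l0) < (1 - l0) / 2 -> tail_bound l mu X <= eps.
Proof.
  intros Hl0 He. set (m := decay ((1 + l0) / 2)). assert (Hm : 0 < m) by (apply decay_pos; lra).
  set (G := exp (sech2_coeff p / p / m)). assert (HG : 0 < G) by apply exp_pos.
  destruct (eventually_exp_neg_le (2 * m) (eps * (2 * m) / (G * G))) as [M [HM0 HM]];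
    [lra|apply Rdiv_lt_0_compat; nra|].
  exists M. intros X HX l mu Hl Hmu.
  destruct (decay_near l0 l Hl0 Hl) as [Hl1 Hml]. destruct (decay_near l0 mu Hl0 Hmu) as [Hmu1 Hmm].
  fold m in Hml, Hmm.
  pose proof (exp_Qb_div_le _ _ _ Hpot m (decay l) Hm Hml) as HGl.
  pose proof (exp_Qb_div_le _ _ _ Hpot m (decay mu) Hm Hmm) as HGmu. fold G in HGl, HGmu.
  specialize (HM X HX).
  assert (HE : exp (- (decay l + decay mu) * X) <= exp (- (2 * m) * X)) by (apply exp_le_exp_of_le; nra).
  pose proof (exp_pos (- (decay l + decay mu) * X)). pose proof (exp_pos (- (2 * m) * X)).
  pose proof (exp_pos (sech2_coeff p / p / decay l)). pose proof (exp_pos (sech2_coeff p / p / decay mu)).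
  unfold tail_bound, v_const. unfold Rdiv at 1.
  apply Rle_trans with (G * G * exp (- (2 * m) * X) * / (2 * m)).
  - apply Rmult_le_compat; [apply Rmult_le_pos; [apply Rmult_le_pos|]; lra|left; apply Rinv_0_lt_compat; lra| |].
    + apply Rmult_le_compat; [apply Rmult_le_pos; lra|lra|apply Rmult_le_compat; lra|lra].
    + apply Rinv_le_contravar; lra.
  - apply Rle_trans with (G * G * (eps * (2 * m) / (G * G)) * / (2 * m)).
    + apply Rmult_le_compat_r; [left; apply Rinv_0_lt_compat; lra|]. apply Rmult_le_compat_l; nra.
    + right. field. split; lra.
Qed.

Lemma Rabs_v_le_right l a t : l < 1 -> a <= t -> Rabs (v t l) <= v_const l * exp (- decay l * a).
Proof.
  intros Hl Ht. eapply Rle_trans; [now apply Rabs_v_le|].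
  apply Rmult_le_compat_l; [left; apply exp_pos|]. apply exp_le_exp_of_le.
  pose proof (decay_pos l Hl). nra.
Qed.

(* Uniform continuity of [v] on the compact [x0 - 1, X] x [l0 - r, l0 + r]. *)
Lemma v_uniformly_close x0 l0 X eta : l0 < 1 -> 0 < eta -> exists d, 0 < d /\
  forall t l, x0 - 1 <= t <= X -> Rabs (l - l0) < d ->
    l < 1 /\ Rabs (v t l - v t l0) <= eta /\ Rabs (v t l) <= v_const l0 * exp (- decay l0 * (x0 - 1)) + eta.
Proof.
  intros Hl0 He. set (r := (1 - l0) / 2).
  destruct (uniform_continuity_2d v (x0 - 1) X (l0 - r) (l0 + r)) with (eps := mkposreal eta He)
    as [d Hd].
  { intros x y _ Hy. apply continuity_2d_v. unfold r in Hy. lra. }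
  exists (Rmin d r). split; [apply Rmin_pos; [apply cond_pos|unfold r; lra]|].
  intros t l Ht Hl. pose proof (Rmin_l d r). pose proof (Rmin_r d r).
  apply Rabs_lt_between in Hl as Hl'.
  assert (Hc : Rabs (v t l - v t l0) <= eta).
  { left. apply (Hd t l0 t l); try lra. rewrite Rminus_diag, Rabs_R0. apply cond_pos. }
  pose proof (Rabs_v_le_right l0 (x0 - 1) t Hl0 ltac:(lra)).
  split; [unfold r in *; lra|split; [exact Hc|]].
  replace (v t l) with (v t l0 + (v t l - v t l0)) by ring.
  eapply Rle_trans; [apply Rabs_triang|lra].
Qed.

Lemma RInt_vv_close_long x0 l0 X eps : l0 < 1 -> x0 + 1 <= X -> 0 < eps -> exists d, 0 < d /\
  forall l mu, Rabs (l - l0) < d -> Rabs (mu - l0) < d ->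
  Rabs (RInt (fun t => v t l * v t mu) x0 X - RInt (fun t => v t l0 * v t l0) x0 X) <= eps.
Proof.
  intros Hl0 HX He. set (B := v_const l0 * exp (- decay l0 * (x0 - 1))).
  assert (HB : 0 < B) by (apply Rmult_lt_0_compat; apply exp_pos).
  set (eta := Rmin 1 (eps / ((2 * B + 1) * (X - x0)))).
  assert (Heta : 0 < eta) by (apply Rmin_pos; [lra|apply Rdiv_lt_0_compat; nra]).
  assert (Heta1 : eta <= 1) by apply Rmin_l.
  destruct (v_uniformly_close x0 l0 X eta Hl0 Heta) as [d [Hd Hclose]].
  exists d. split; [exact Hd|]. intros l mu Hl Hmu.
  assert (Hl0' : Rabs (l0 - l0) < d) by (rewrite Rminus_diag, Rabs_R0; lra).
  destruct (Hclose x0 l ltac:(lra) Hl) as [Hl1 _]. destruct (Hclose x0 mu ltac:(lra) Hmu) as [Hmu1 _].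
  pose proof (continuous_vv l mu Hl1 Hmu1). pose proof (continuous_vv l0 l0 Hl0 Hl0).
  assert (Hdc : forall t, continuous (fun t : R => v t l * v t mu - v t l0 * v t l0) t)
    by (intros; apply continuous_Rminus; auto).
  rewrite <- RInt_Rminus by auto.
  eapply Rle_trans; [apply (abs_RInt_le_const_sym _ Hdc x0 X ((2 * B + eta) * eta))|].
  - intros t Ht. rewrite Rmin_left, Rmax_right in Ht by lra.
    destruct (Hclose t l ltac:(lra) Hl) as [_ [H1 _]]. destruct (Hclose t mu ltac:(lra) Hmu) as [_ [H2 _]].
    apply Rabs_mult_sub_sqr_le; auto. apply Rabs_v_le_right; lra.
  - rewrite Rabs_right by lra.
    apply Rle_trans with ((X - x0) * ((2 * B + 1) * eta)).
    + apply Rmult_le_compat_l; [lra|]. apply Rmult_le_compat_r; lra.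
    + apply Rle_trans with ((X - x0) * ((2 * B + 1) * (eps / ((2 * B + 1) * (X - x0))))).
      * apply Rmult_le_compat_l; [lra|]. apply Rmult_le_compat_l; [lra|apply Rmin_r].
      * right. field. nra.
Qed.

Lemma RInt_vv_close_short x0 l0 X eps : l0 < 1 -> x0 + 1 <= X -> 0 < eps -> exists d, 0 < d /\
  forall x l mu, Rabs (x - x0) < d -> Rabs (l - l0) < d -> Rabs (mu - l0) < d ->
  Rabs (RInt (fun t => v t l * v t mu) x x0) < eps.
Proof.
  intros Hl0 HX He. set (B := v_const l0 * exp (- decay l0 * (x0 - 1)) + 1).
  assert (HB : 1 < B) by (unfold B; pose proof (exp_pos (- decay l0 * (x0 - 1))); unfold v_const;
    pose proof (exp_pos (sech2_coeff p / p / decay l0)); nra).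
  destruct (v_uniformly_close x0 l0 X 1 Hl0 Rlt_0_1) as [d1 [Hd1 Hclose]].
  set (d := Rmin (Rmin d1 1) (eps / (B * B))).
  assert (Hd : 0 < d) by (repeat apply Rmin_pos; try lra; apply Rdiv_lt_0_compat; nra).
  pose proof (Rmin_l (Rmin d1 1) (eps / (B * B))) as Hd_l. pose proof (Rmin_r (Rmin d1 1) (eps / (B * B))) as Hd_r.
  pose proof (Rmin_l d1 1). pose proof (Rmin_r d1 1). fold d in Hd_l, Hd_r.
  exists d. split; [exact Hd|]. intros x l mu Hx Hl Hmu.
  destruct (Hclose x0 l ltac:(lra) ltac:(lra)) as [Hl1 _]. destruct (Hclose x0 mu ltac:(lra) ltac:(lra)) as [Hmu1 _].
  eapply Rle_lt_trans; [apply (abs_RInt_le_const_sym _ (continuous_vv l mu Hl1 Hmu1) x x0 (B * B))|].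
  - intros t Ht. apply Rabs_lt_between in Hx.
    assert (Ht' : x0 - 1 <= t <= X) by (split; [eapply Rle_trans; [|apply Ht]|eapply Rle_trans; [apply Ht|]];
      [apply Rmin_glb|apply Rmax_lub]; lra).
    destruct (Hclose t l Ht' ltac:(lra)) as [_ [_ Hvl]]. destruct (Hclose t mu Ht' ltac:(lra)) as [_ [_ Hvmu]].
    rewrite Rabs_mult. apply Rmult_le_compat; try apply Rabs_pos; unfold B; lra.
  - rewrite Rabs_minus_sym. apply Rlt_le_trans with (d * (B * B)); [apply Rmult_lt_compat_r; nra|].
    apply Rle_trans with (eps / (B * B) * (B * B)); [apply Rmult_le_compat_r; nra|].
    right. field. nra.
Qed.

Lemma RInt_vv_close x0 l0 X eps : l0 < 1 -> x0 + 1 <= X -> 0 < eps -> exists d, 0 < d /\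
  forall x l mu, Rabs (x - x0) < d -> Rabs (l - l0) < d -> Rabs (mu - l0) < d ->
  Rabs (RInt (fun t => v t l * v t mu) x X - RInt (fun t => v t l0 * v t l0) x0 X) < eps.
Proof.
  intros Hl0 HX He.
  destruct (RInt_vv_close_long x0 l0 X (eps / 2) Hl0 HX ltac:(lra)) as [d1 [Hd1 Hlong]].
  destruct (RInt_vv_close_short x0 l0 X (eps / 2) Hl0 HX ltac:(lra)) as [d2 [Hd2 Hshort]].
  destruct (v_uniformly_close x0 l0 X 1 Hl0 Rlt_0_1) as [d3 [Hd3 Hclose]].
  exists (Rmin d1 (Rmin d2 d3)). split; [repeat apply Rmin_pos; auto|].
  intros x l mu Hx Hl Hmu.
  pose proof (Rmin_l d1 (Rmin d2 d3)). pose proof (Rmin_r d1 (Rmin d2 d3)).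
  pose proof (Rmin_l d2 d3). pose proof (Rmin_r d2 d3).
  destruct (Hclose x0 l ltac:(lra) ltac:(lra)) as [Hl1 _]. destruct (Hclose x0 mu ltac:(lra) ltac:(lra)) as [Hmu1 _].
  pose proof (RInt_Chasles_sub _ (continuous_vv l mu Hl1 Hmu1) x x0 X).
  specialize (Hlong l mu ltac:(lra) ltac:(lra)). specialize (Hshort x l mu ltac:(lra) ltac:(lra) ltac:(lra)).
  pose proof (Rabs_bounds (RInt (fun t => v t l * v t mu) x x0)).
  pose proof (Rabs_bounds (RInt (fun t => v t l * v t mu) x0 X - RInt (fun t => v t l0 * v t l0) x0 X)).
  apply Rabs_lt_between. lra.
Qed.

Lemma tail_integral_continuity x0 l0 eps : l0 < 1 -> 0 < eps -> exists d, 0 < d /\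
  forall x l mu, Rabs (x - x0) < d -> Rabs (l - l0) < d -> Rabs (mu - l0) < d ->
  Rabs (tail_integral x l mu - tail_integral x0 l0 l0) < eps.
Proof.
  intros Hl0 He. set (r := (1 - l0) / 2).
  destruct (tail_bound_uniform l0 (eps / 4) Hl0 ltac:(lra)) as [X0 HX0].
  set (X := Rmax X0 (x0 + 1)). assert (HX1 : X0 <= X) by apply Rmax_l. assert (HX2 : x0 + 1 <= X) by apply Rmax_r.
  destruct (RInt_vv_close x0 l0 X (eps / 4) Hl0 HX2 ltac:(lra)) as [d [Hd Hclose]].
  exists (Rmin d (Rmin 1 r)). split; [repeat apply Rmin_pos; unfold r; lra|].
  intros x l mu Hx Hl Hmu.
  pose proof (Rmin_l d (Rmin 1 r)). pose proof (Rmin_r d (Rmin 1 r)). pose proof (Rmin_l 1 r). pose proof (Rmin_r 1 r).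
  assert (Hl' : Rabs (l - l0) < r) by lra. assert (Hmu' : Rabs (mu - l0) < r) by lra.
  assert (Hl00 : Rabs (l0 - l0) < r) by (rewrite Rminus_diag, Rabs_R0; unfold r; lra).
  destruct (decay_near l0 l Hl0 Hl') as [Hl1 _]. destruct (decay_near l0 mu Hl0 Hmu') as [Hmu1 _].
  assert (HxX : x <= X) by (apply Rabs_lt_between in Hx; lra).
  pose proof (abs_tail_integral_sub_le x l mu X Hl1 Hmu1 HxX).
  pose proof (abs_tail_integral_sub_le x0 l0 l0 X Hl0 Hl0 ltac:(lra)).
  pose proof (HX0 X HX1 l mu Hl' Hmu'). pose proof (HX0 X HX1 l0 l0 Hl00 Hl00).
  specialize (Hclose x l mu ltac:(lra) ltac:(lra) ltac:(lra)).
  pose proof (Rabs_bounds (tail_integral x l mu - RInt (fun t => v t l * v t mu) x X)).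
  pose proof (Rabs_bounds (tail_integral x0 l0 l0 - RInt (fun t => v t l0 * v t l0) x0 X)).
  pose proof (Rabs_bounds (RInt (fun t => v t l * v t mu) x X - RInt (fun t => v t l0 * v t l0) x0 X)).
  apply Rabs_lt_between. lra.
Qed.

(** * The branch of zeros *)

Lemma slope_ratio_close z0 l eps : l < 1 -> dv l z0 <> 0 -> 0 < eps -> exists eta, 0 < eta /\
  forall y c l1 l2 l3, Rabs (y - z0) < eta -> Rabs (c - z0) < eta ->
    Rabs (l1 - l) < eta -> Rabs (l2 - l) < eta -> Rabs (l3 - l) < eta ->
    Rabs (tail_integral y l1 l2 / (dv l1 c * dv l3 y) - tail_integral z0 l l / (dv l z0 * dv l z0)) < eps.
Proof.
  intros Hl Hd He.
  destruct (div_mult_continuity (tail_integral z0 l l) (dv l z0) (dv l z0) eps Hd Hd He) as [rho [Hrho Hq]].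
  destruct (tail_integral_continuity z0 l rho Hl Hrho) as [e1 [He1 HJ]].
  destruct (continuity_2d_dv z0 l Hl (mkposreal rho Hrho)) as [e2 HD]. simpl in HD.
  exists (Rmin e1 e2). split; [apply Rmin_pos; [lra|apply cond_pos]|].
  intros y c l1 l2 l3 Hy Hc H1 H2 H3. pose proof (Rmin_l e1 e2). pose proof (Rmin_r e1 e2).
  apply Hq; [apply HJ|apply HD|apply HD]; lra.
Qed.

Lemma strict_mono_of_slope l s a b : l < 1 -> (forall x, a <= x <= b -> 0 < s * dv l x) -> a < b ->
  s * v a l < s * v b l.
Proof.
  intros Hl Hs Hab.
  destruct (MVT_gen (fun x => v x l) a b (dv l)) as [c [Hc Heq]].
  - intros x _. now apply is_derive_v.
  - intros x _. exact (is_derive_continuity_pt _ _ _ (is_derive_v l x Hl)).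
  - rewrite Rmin_left, Rmax_right in Hc by lra. specialize (Hs c Hc).
    assert (s * (v b l - v a l) = s * dv l c * (b - a)) by (rewrite Heq; ring).
    assert (0 < s * dv l c * (b - a)) by (apply Rmult_lt_0_compat; lra). nra.
Qed.

Lemma sign_persists x l0 s : l0 < 1 -> s * v x l0 <> 0 ->
  exists d : posreal, forall l, Rabs (l - l0) < d -> 0 < (s * v x l) * (s * v x l0).
Proof.
  intros Hl0 Hx. assert (Hv0 : 0 < Rabs (s * v x l0)) by now apply Rabs_pos_lt.
  destruct (continuity_2d_pt_mult (fun _ _ => s) v x l0 (continuity_2d_pt_const _ _ _)
    (continuity_2d_v x l0 Hl0) (mkposreal _ Hv0)) as [d Hd].
  exists d. intros l Hl. apply Rmult_pos_of_close, Hd; auto. rewrite Rminus_diag, Rabs_R0. apply cond_pos.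
Qed.

(* For [|l - lam1| < delta], [v . l] has exactly one zero in [x1 - r, x1 + r]. *)
Record zero_box (lam1 x1 r delta s : R) : Prop := {
  box_r_pos : 0 < r;
  box_delta_pos : 0 < delta;
  box_delta_le : delta <= (1 - lam1) / 2;
  box_slope : forall l x, Rabs (l - lam1) < delta -> x1 - r <= x <= x1 + r -> 0 < s * dv l x;
  box_ends : forall l, Rabs (l - lam1) < delta -> s * v (x1 - r) l < 0 < s * v (x1 + r) l }.

Lemma zero_box_exists lam1 x1 : lam1 < 1 -> simple_zero (fun x => v x lam1) x1 ->
  exists r delta s, zero_box lam1 x1 r delta s.
Proof.
  intros Hl1 [_ [Hz Hs0]]. set (s := dv lam1 x1). fold (dv lam1 x1) s in Hs0.
  assert (Hs : 0 < Rabs s) by now apply Rabs_pos_lt.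
  destruct (continuity_2d_dv x1 lam1 Hl1 (mkposreal _ Hs)) as [da Hda]. simpl in Hda.
  set (r := da / 2). assert (Hr : 0 < r) by (unfold r; pose proof (cond_pos da); lra).
  assert (Hslope : forall l x, Rabs (l - lam1) < da -> x1 - r <= x <= x1 + r -> 0 < s * dv l x).
  { intros l x Hl Hx. rewrite Rmult_comm. apply Rmult_pos_of_close. apply Hda; auto.
    apply Rabs_lt_between. unfold r in Hx. pose proof (cond_pos da). lra. }
  assert (Hl0 : Rabs (lam1 - lam1) < da) by (rewrite Rminus_diag, Rabs_R0; apply cond_pos).
  assert (Hmono : forall a b, x1 - r <= a -> a < b -> b <= x1 + r -> s * v a lam1 < s * v b lam1).
  { intros a b Ha Hab Hb. apply strict_mono_of_slope; auto. intros x Hx. apply Hslope; [exact Hl0|lra]. }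
  pose proof (Hmono x1 (x1 + r) ltac:(lra) ltac:(lra) ltac:(lra)) as Hright.
  pose proof (Hmono (x1 - r) x1 ltac:(lra) ltac:(lra) ltac:(lra)) as Hleft.
  rewrite Hz, Rmult_0_r in Hright, Hleft.
  destruct (sign_persists (x1 + r) lam1 s Hl1 ltac:(lra)) as [db Hdb].
  destruct (sign_persists (x1 - r) lam1 s Hl1 ltac:(lra)) as [dc Hdc].
  set (delta := Rmin (Rmin da db) (Rmin dc ((1 - lam1) / 2))).
  pose proof (Rmin_l (Rmin da db) (Rmin dc ((1 - lam1) / 2))) as Hd_l.
  pose proof (Rmin_r (Rmin da db) (Rmin dc ((1 - lam1) / 2))) as Hd_r.
  pose proof (Rmin_l da db). pose proof (Rmin_r da db). pose proof (Rmin_l dc ((1 - lam1) / 2)).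
  pose proof (Rmin_r dc ((1 - lam1) / 2)). fold delta in Hd_l, Hd_r.
  exists r, delta, s. split; auto.
  - unfold delta. repeat apply Rmin_pos; try apply cond_pos. lra.
  - lra.
  - intros l x Hl Hx. apply Hslope; [lra|auto].
  - intros l Hl. specialize (Hdb l ltac:(lra)). specialize (Hdc l ltac:(lra)). split; nra.
Qed.

Section Branch.

Variables lam1 x1 r delta s : R.
Hypothesis HB : zero_box lam1 x1 r delta s.

Lemma box_lt_1 l : Rabs (l - lam1) < delta -> l < 1.
Proof. intros Hl. pose proof (box_delta_le _ _ _ _ _ HB). apply Rabs_lt_between in Hl. lra. Qed.

Lemma box_near l mu : Rabs (l - lam1) < delta -> Rabs (mu - l) < delta - Rabs (l - lam1) ->
  Rabs (mu - lam1) < delta.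
Proof.
  intros Hl Hmu. replace (mu - lam1) with ((mu - l) + (l - lam1)) by ring.
  eapply Rle_lt_trans; [apply Rabs_triang|]. lra.
Qed.

Lemma box_strict_mono l a b : Rabs (l - lam1) < delta ->
  x1 - r <= a -> a < b -> b <= x1 + r -> s * v a l < s * v b l.
Proof.
  intros Hl Ha Hab Hb. apply strict_mono_of_slope; auto; [now apply box_lt_1|].
  intros x Hx. apply (box_slope _ _ _ _ _ HB); auto; lra.
Qed.

Lemma dv_neq_0_in_box l x : Rabs (l - lam1) < delta -> x1 - r <= x <= x1 + r -> dv l x <> 0.
Proof.
  intros Hl Hx E. pose proof (box_slope _ _ _ _ _ HB l x Hl Hx) as Hs. rewrite E, Rmult_0_r in Hs. lra.
Qed.

Lemma box_zero_between l a b : Rabs (l - lam1) < delta ->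
  a < b -> s * v a l < 0 -> 0 < s * v b l -> exists z, a < z < b /\ v z l = 0.
Proof.
  intros Hl Hab Ha Hb. pose proof (box_lt_1 l Hl) as Hl1.
  destruct (IVT_interv (fun x => s * v x l) a b) as [z [Hz Hvz]]; auto.
  - intros x _. apply (is_derive_continuity_pt _ _ (s * dv l x)).
    apply (is_derive_scal (fun x => v x l)), is_derive_v; auto.
  - assert (Hz0 : v z l = 0) by (destruct (Rmult_integral _ _ Hvz) as [Hs|]; [subst; lra|auto]).
    assert (z <> a) by (intros ->; rewrite Hz0 in Ha; lra).
    assert (z <> b) by (intros ->; rewrite Hz0 in Hb; lra).
    exists z. split; [lra|exact Hz0].
Qed.

Definition zero_branch (l : R) :=
  epsilon (inhabits 0) (fun z => x1 - r < z < x1 + r /\ v z l = 0).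

Lemma zero_branch_spec l : Rabs (l - lam1) < delta ->
  x1 - r < zero_branch l < x1 + r /\ v (zero_branch l) l = 0.
Proof.
  intros Hl. unfold zero_branch. apply epsilon_spec. destruct (box_ends _ _ _ _ _ HB l Hl).
  apply box_zero_between; auto. pose proof (box_r_pos _ _ _ _ _ HB). lra.
Qed.

Lemma zero_branch_unique l z : Rabs (l - lam1) < delta ->
  x1 - r <= z <= x1 + r -> v z l = 0 -> z = zero_branch l.
Proof.
  intros Hl Hz Hvz. destruct (zero_branch_spec l Hl) as [H1 H2].
  destruct (Rtotal_order z (zero_branch l)) as [Hlt|[Heq|Hgt]]; auto.
  - pose proof (box_strict_mono l z (zero_branch l) Hl ltac:(lra) Hlt ltac:(lra)) as H.
    rewrite Hvz, H2 in H. lra.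
  - pose proof (box_strict_mono l (zero_branch l) z Hl ltac:(lra) Hgt ltac:(lra)) as H.
    rewrite Hvz, H2 in H. lra.
Qed.

Lemma zero_branch_continuity l eps : Rabs (l - lam1) < delta -> 0 < eps ->
  exists eta, 0 < eta /\ forall mu, Rabs (mu - l) < eta ->
    Rabs (mu - lam1) < delta /\ Rabs (zero_branch mu - zero_branch l) < eps.
Proof.
  intros Hl He. pose proof (box_lt_1 l Hl) as Hl1.
  destruct (zero_branch_spec l Hl) as [Hz Hvz]. set (z0 := zero_branch l) in *.
  (* bracket [z0] by [a < z0 < b] inside the box; the signs of [v a] and [v b] persist *)
  set (e := Rmin (eps / 2) (Rmin (z0 - (x1 - r)) (x1 + r - z0) / 2)).
  assert (He0 : 0 < e) by (unfold e; apply Rmin_pos; [lra|]; apply Rmult_lt_0_compat; [apply Rmin_pos; lra|lra]).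
  pose proof (Rmin_l (eps / 2) (Rmin (z0 - (x1 - r)) (x1 + r - z0) / 2)) as He_l.
  pose proof (Rmin_r (eps / 2) (Rmin (z0 - (x1 - r)) (x1 + r - z0) / 2)) as He_r.
  pose proof (Rmin_l (z0 - (x1 - r)) (x1 + r - z0)). pose proof (Rmin_r (z0 - (x1 - r)) (x1 + r - z0)).
  fold e in He_l, He_r.
  pose proof (box_strict_mono l (z0 - e) z0 Hl ltac:(lra) ltac:(lra) ltac:(lra)) as Ha.
  pose proof (box_strict_mono l z0 (z0 + e) Hl ltac:(lra) ltac:(lra) ltac:(lra)) as Hb.
  rewrite Hvz, Rmult_0_r in Ha, Hb.
  destruct (sign_persists (z0 - e) l s Hl1 ltac:(lra)) as [da Hda].
  destruct (sign_persists (z0 + e) l s Hl1 ltac:(lra)) as [db Hdb].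
  assert (Hm : 0 < delta - Rabs (l - lam1)) by lra.
  exists (Rmin (Rmin da db) (delta - Rabs (l - lam1))). split; [repeat apply Rmin_pos; try apply cond_pos; lra|].
  intros mu Hmu.
  pose proof (Rmin_l (Rmin da db) (delta - Rabs (l - lam1))). pose proof (Rmin_r (Rmin da db) (delta - Rabs (l - lam1))).
  pose proof (Rmin_l da db). pose proof (Rmin_r da db).
  assert (Hmu1 : Rabs (mu - lam1) < delta) by (apply (box_near l); auto; lra).
  split; [exact Hmu1|].
  specialize (Hda mu ltac:(lra)). specialize (Hdb mu ltac:(lra)).
  destruct (box_zero_between mu (z0 - e) (z0 + e) Hmu1 ltac:(lra) ltac:(nra) ltac:(nra)) as [z [Hz' Hvz']].
  rewrite <- (zero_branch_unique mu z Hmu1 ltac:(lra) Hvz').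
  apply Rabs_lt_between. fold z0. lra.
Qed.

(* The slope given by the Wronskian identity: [x0' = J / v_x ^ 2]. *)
Definition branch_slope (l : R) :=
  tail_integral (zero_branch l) l l / (dv l (zero_branch l) * dv l (zero_branch l)).

Lemma zero_branch_diff_quotient l mu : Rabs (l - lam1) < delta -> Rabs (mu - lam1) < delta -> mu <> l ->
  exists c, Rabs (c - zero_branch l) <= Rabs (zero_branch mu - zero_branch l) /\
    (zero_branch mu - zero_branch l) / (mu - l)
    = tail_integral (zero_branch mu) l mu / (dv l c * dv mu (zero_branch mu)).
Proof.
  intros Hl Hmu Hne. pose proof (box_lt_1 l Hl) as Hl1. pose proof (box_lt_1 mu Hmu) as Hmu1.
  destruct (zero_branch_spec l Hl) as [Hz Hvz]. destruct (zero_branch_spec mu Hmu) as [Hy Hvy].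
  set (z0 := zero_branch l) in *. set (y := zero_branch mu) in *.
  pose proof (wronskian_tail_integral y l mu Hl1 Hmu1) as HW. rewrite Hvy, Rmult_0_r, Rminus_0_r in HW.
  destruct (MVT_gen (fun x => v x l) z0 y (dv l)) as [c [Hc Heq]].
  - intros x _. now apply is_derive_v.
  - intros x _. exact (is_derive_continuity_pt _ _ _ (is_derive_v l x Hl1)).
  - rewrite Hvz, Rminus_0_r in Heq. exists c.
    assert (Hcb : x1 - r <= c <= x1 + r).
    { split; [apply Rle_trans with (Rmin z0 y); [apply Rmin_glb|apply Hc]
             |apply Rle_trans with (Rmax z0 y); [apply Hc|apply Rmax_lub]]; lra. }
    split.
    + destruct (Rle_dec z0 y) as [Hle|Hle].
      * rewrite Rmin_left, Rmax_right in Hc by lra. rewrite !Rabs_right by lra. lra.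
      * rewrite Rmin_right, Rmax_left in Hc by lra. rewrite !Rabs_left1 by lra. lra.
    + pose proof (dv_neq_0_in_box l c Hl Hcb). pose proof (dv_neq_0_in_box mu y Hmu ltac:(lra)).
      rewrite Heq in HW. field_simplify_eq; [|repeat split; auto; lra]. nra.
Qed.

Lemma is_derive_zero_branch l : Rabs (l - lam1) < delta -> is_derive zero_branch l (branch_slope l).
Proof.
  intros Hl. pose proof (box_lt_1 l Hl) as Hl1.
  destruct (zero_branch_spec l Hl) as [Hz _].
  apply is_derive_Reals. intros eps He.
  destruct (slope_ratio_close (zero_branch l) l eps Hl1 (dv_neq_0_in_box l (zero_branch l) Hl ltac:(lra)) He)
    as [eta [Heta Hclose]].
  destruct (zero_branch_continuity l eta Hl Heta) as [e [He' Hcont]].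
  exists (mkposreal _ (Rmin_pos _ _ Heta He')). simpl. intros h Hh0 Hh.
  pose proof (Rmin_l eta e). pose proof (Rmin_r eta e).
  assert (Hh' : Rabs (l + h - l) < Rmin eta e) by (replace (l + h - l) with h by ring; lra).
  destruct (Hcont (l + h) ltac:(lra)) as [Hmu1 Hy].
  destruct (zero_branch_diff_quotient l (l + h) Hl Hmu1 ltac:(lra)) as [c [Hc Hq]].
  replace (l + h - l) with h in Hq by ring. rewrite Hq. unfold branch_slope.
  apply (Hclose (zero_branch (l + h)) c l (l + h) (l + h)); try lra. rewrite Rminus_diag, Rabs_R0. lra.
Qed.

Lemma continuous_branch_slope l : Rabs (l - lam1) < delta -> continuous branch_slope l.
Proof.
  intros Hl. pose proof (box_lt_1 l Hl) as Hl1.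
  destruct (zero_branch_spec l Hl) as [Hz _].
  apply continuity_pt_filterlim, continuity_pt_locally. intros eps.
  destruct (slope_ratio_close (zero_branch l) l eps Hl1 (dv_neq_0_in_box l (zero_branch l) Hl ltac:(lra)) (cond_pos eps))
    as [eta [Heta Hclose]].
  destruct (zero_branch_continuity l eta Hl Heta) as [e [He' Hcont]].
  exists (mkposreal _ (Rmin_pos _ _ Heta He')). intros mu Hmu. change (Rabs (mu - l) < Rmin eta e) in Hmu.
  pose proof (Rmin_l eta e). pose proof (Rmin_r eta e).
  destruct (Hcont mu ltac:(lra)) as [Hmu1 Hy].
  unfold branch_slope. apply (Hclose (zero_branch mu) (zero_branch mu) mu mu mu); lra.
Qed.

Lemma Rabs_sub_lt_of_between l : lam1 - delta < l < lam1 + delta -> Rabs (l - lam1) < delta.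
Proof. intros Hl. apply Rabs_lt_between. lra. Qed.

Lemma Derive_zero_branch l : Rabs (l - lam1) < delta -> Derive zero_branch l = branch_slope l.
Proof. intros Hl. now apply is_derive_unique, is_derive_zero_branch. Qed.

Lemma zero_branch_C1 : C1_on zero_branch (lam1 - delta) (lam1 + delta).
Proof.
  intros t Ht. apply Rabs_sub_lt_of_between in Ht. split.
  - exists (branch_slope t). now apply is_derive_zero_branch.
  - apply (continuous_ext_loc _ branch_slope); [|now apply continuous_branch_slope].
    exists (mkposreal _ (proj2 (Rlt_0_minus _ _) Ht)). intros y Hy. change (Rabs (y - t) < delta - Rabs (t - lam1)) in Hy.
    symmetry. apply Derive_zero_branch, (box_near t); auto.
Qed.

Lemma zero_branch_simple_zero l : lam1 - delta < l < lam1 + delta ->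
  simple_zero (fun x => v x l) (zero_branch l).
Proof.
  intros Hl. apply Rabs_sub_lt_of_between in Hl. pose proof (box_lt_1 l Hl).
  destruct (zero_branch_spec l Hl) as [Hz Hvz]. split; [|split; auto].
  - exists (dv l (zero_branch l)). now apply is_derive_v.
  - apply (dv_neq_0_in_box l); auto; lra.
Qed.

Lemma zero_branch_lam1 : v x1 lam1 = 0 -> zero_branch lam1 = x1.
Proof.
  intros Hz. pose proof (box_r_pos _ _ _ _ _ HB). pose proof (box_delta_pos _ _ _ _ _ HB).
  symmetry. apply zero_branch_unique; auto; [rewrite Rminus_diag, Rabs_R0|]; lra.
Qed.

Lemma Derive_zero_branch_pos : 0 < Derive zero_branch lam1.
Proof.
  assert (Hl : Rabs (lam1 - lam1) < delta)
    by (rewrite Rminus_diag, Rabs_R0; exact (box_delta_pos _ _ _ _ _ HB)).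
  rewrite Derive_zero_branch by exact Hl. destruct (zero_branch_spec lam1 Hl) as [Hz _].
  pose proof (dv_neq_0_in_box lam1 (zero_branch lam1) Hl ltac:(lra)).
  apply Rdiv_lt_0_compat; [apply tail_integral_pos, (box_lt_1 lam1 Hl)|].
  destruct (Rlt_le_dec 0 (dv lam1 (zero_branch lam1))); nra.
Qed.

(* A continuous branch through [(lam1, x1)] cannot leave the box without crossing
   [x = x1 +- r], where [v] does not vanish. *)
Lemma zero_branch_unique_C1 delta' (y : R -> R) : 0 < delta' ->
  C1_on y (lam1 - delta') (lam1 + delta') -> y lam1 = x1 ->
  (forall lam, lam1 - delta' < lam < lam1 + delta' -> simple_zero (fun x => v x lam) (y lam)) ->
  forall lam, lam1 - Rmin delta delta' < lam < lam1 + Rmin delta delta' -> y lam = zero_branch lam.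
Proof.
  intros Hd' Hy Hy1 Hyz l Hl.
  pose proof (Rmin_l delta delta'). pose proof (Rmin_r delta delta').
  pose proof (box_r_pos _ _ _ _ _ HB) as Hr.
  assert (Hin : forall t, Rmin lam1 l <= t <= Rmax lam1 l -> lam1 - Rmin delta delta' < t < lam1 + Rmin delta delta').
  { intros t Ht. split; [eapply Rlt_le_trans; [|apply Ht]; apply Rmin_glb_lt
                        |eapply Rle_lt_trans; [apply Ht|]; apply Rmax_lub_lt]; lra. }
  destruct (Hyz l ltac:(lra)) as [_ [Hvy _]].
  destruct (Rlt_le_dec (Rabs (y l - x1)) r) as [Hlt|Hge].
  - apply zero_branch_unique; [apply Rabs_sub_lt_of_between; lra| |auto].
    apply Rabs_lt_between in Hlt. lra.
  - exfalso. destruct (exists_Rabs_sub_eq y lam1 l x1 r) as [t [Ht Hyt]]; auto.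
    + intros t Ht. destruct (proj1 (Hy t ltac:(pose proof (Hin t Ht); lra))) as [dy Hdy].
      exact (is_derive_continuity_pt y t dy Hdy).
    + rewrite Hy1, Rminus_diag, Rabs_R0. lra.
    + specialize (Hin t Ht). destruct (Hyz t ltac:(lra)) as [_ [Hvt _]].
      destruct (box_ends _ _ _ _ _ HB t (Rabs_sub_lt_of_between t ltac:(lra))).
      destruct (Rcase_abs (y t - x1)); [rewrite Rabs_left in Hyt by lra|rewrite Rabs_right in Hyt by lra];
        [replace (y t) with (x1 - r) in Hvt by lra|replace (y t) with (x1 + r) in Hvt by lra];
        rewrite Hvt in *; lra.
Qed.

End Branch.

End Solutions.

Theorem lemma5p3 (p : R) (v : R -> R -> R) (lam1 x1 : R) :
  0 < p ->
  (forall lam, lam < 1 ->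
     solves_ode p lam (fun x => v x lam) /\
     normalized_at_pinfty lam (fun x => v x lam)) ->
  lam1 < 1 ->
  simple_zero (fun x => v x lam1) x1 ->
  exists (delta : R) (x0 : R -> R),
    0 < delta /\ lam1 + delta <= 1 /\
    C1_on x0 (lam1 - delta) (lam1 + delta) /\
    (forall lam, lam1 - delta < lam < lam1 + delta ->
       simple_zero (fun x => v x lam) (x0 lam)) /\
    x0 lam1 = x1 /\
    0 < Derive x0 lam1 /\
    (* uniqueness: any other such C^1 branch through (lam1, x1)
       coincides with x0 on the common interval *)
    (forall (delta' : R) (y : R -> R),
       0 < delta' ->
       C1_on y (lam1 - delta') (lam1 + delta') ->
       y lam1 = x1 ->
       (forall lam, lam1 - delta' < lam < lam1 + delta' ->
          simple_zero (fun x => v x lam) (y lam)) ->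
       forall lam, lam1 - Rmin delta delta' < lam < lam1 + Rmin delta delta' ->
          y lam = x0 lam).
Proof.
  intros Hp Hv Hl1 Hsz.
  destruct (zero_box_exists p v Hp Hv lam1 x1 Hl1 Hsz) as [r [delta [s HB]]].
  exists delta, (zero_branch v x1 r).
  pose proof (box_delta_pos _ _ _ _ _ _ HB). pose proof (box_delta_le _ _ _ _ _ _ HB).
  split; [lra|]. split; [lra|].
  split; [exact (zero_branch_C1 p v Hp Hv lam1 x1 r delta s HB)|].
  split; [exact (zero_branch_simple_zero p v Hv lam1 x1 r delta s HB)|].
  split; [exact (zero_branch_lam1 p v Hv lam1 x1 r delta s HB (proj1 (proj2 Hsz)))|].
  split; [exact (Derive_zero_branch_pos p v Hp Hv lam1 x1 r delta s HB)|].
  exact (zero_branch_unique_C1 p v Hv lam1 x1 r delta s HB).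
Qed.
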